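(* Fix $T>0$ and $\rho\in[0,T)$. Let $\xi\in C([\rho,T];PC^{(2),1}[0,1])$ satisfy $\alpha_0\xi_x(0,t)+\beta_0\xi(0,t)=0$ for all $t\in[\rho,T]$, and set $f_\xi(t)=\alpha_1\xi_x(1,t)+\beta_1\xi(1,t)$. Assume that for every $t\in[\rho,T]$ the set of points at which $\xi_{xx}(\cdot,t)$ is not differentiable is a subset of $\mathcal I$. Then there exists $C>0$ independent of $\xi$ and $n$ such that for all sufficiently large $n$, $$\sup_{t\in[\rho,T]}\big\|R_n\mathscr P\xi(\cdot,t)-P_nR_n\xi(\cdot,t)-B_nf_\xi(t)\big\|_{2d}\le C\sqrt h\sup_{t\in[\rho,T]}\|\xi(\cdot,t)\|_{PC^{(2),1}[0,1]},$$ where $h=1/(n+1)$.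
   Context: A function $\psi:[0,1]\to\mathbb R$ belongs to $PC^k[0,1]$ if there is a finite partition of $[0,1]$ into disjoint intervals such that on each of them $\psi$ is the restriction of some $C^k[0,1]$ function; $\|\psi\|_{PC^k[0,1]}$ is the supremum of $\|\psi\|_{C^k[a,b]}$ over all intervals $[a,b]\subset[0,1]$ on which $\psi$ is $k$ times continuously differentiable; $PC[0,1]=PC^0[0,1]$. $PC^{(2),1}[0,1]$ is the set of $\psi\in C^1[0,1]\cap H^2(0,1)$ with $\psi_{xx}\in PC^1[0,1]$, with norm $\|\psi\|_{PC^{(2),1}[0,1]}=\|\psi\|_{C^1[0,1]}+\|\psi_{xx}\|_{PC^1[0,1]}$. Standing assumptions: $\theta,\sigma,\lambda\in PC^1[0,1]$ with $\inf_{x\in[0,1]}\theta(x)>0$; $\varphi\in C^1([0,1];C^1[0,1])$ is a kernel $\varphi(x,\tilde x)$; $\alpha_0,\beta_0,\alpha_1,\beta_1$ are real constants. $\mathcal I$ is the set of all points of $[0,1]$ at which at least one of $\theta,\sigma,\lambda$ is not differentiable. For $w\in H^2(0,1)$, $\mathscr Pw(x)=\theta(x)w_{xx}(x)+\sigma(x)w_x(x)+\lambda(x)w(x)+\int_0^x\varphi(x,\tilde x)w(\tilde x)d\tilde x$. Discretization: for $n\ge1$ let $h=1/(n+1)$, $r_0=\alpha_0/(3\alpha_0-2h\beta_0)$, $r_1=\alpha_1/(3\alpha_1+2h\beta_1)$, $q_0=-\beta_0/(\alpha_0-h\beta_0)$, $b_n=2h\theta(nh)/(3\alpha_1+2h\beta_1)$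 (assumed well defined for all $n$). Define $n\times n$ matrices $\Theta_n=\mathrm{diag}(\theta(h),\dots,\theta(nh))$, $\Sigma_n=\mathrm{diag}(\sigma(h),\dots,\sigma(nh))$, $\Lambda_n=\mathrm{diag}(\lambda(h),\dots,\lambda(nh))$; $L_n=h^{-2}M$ where $M$ is tridiagonal with diagonal entries $-2$ except $M_{11}=4r_0-2$, $M_{nn}=4r_1-2$, superdiagonal entries $1$ except $M_{12}=1-r_0$, subdiagonal entries $1$ except $M_{n,n-1}=1-r_1$; $D_n=h^{-1}N$ where $N_{11}=hq_0$, $N_{1j}=0$ for $j\ge2$, and for $i\ge2$: $N_{ii}=1$, $N_{i,i-1}=-1$, other entries $0$; $\Phi_n$ is lower triangular with $(\Phi_n)_{jm}=h\varphi(jh,mh)$ for $m\le j$. Set $P_n=\Theta_nL_n+\Sigma_nD_n+\Lambda_n+\Phi_n$ and $B_n=h^{-2}(0,\dots,0,b_n)^\top\in\mathbb R^n$. For $v\in\mathbb R^n$, $\|v\|_{2d}=\sqrt h\,\|v\|_2$ (Euclidean norm). For $z\in PC[0,1]$, $R_nz=(z(h),z(2h),\dots,z(nh))^\top$. *)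

From Stdlib Require Import Reals.
From Coquelicot Require Import Coquelicot.
Open Scope R_scope.

Definition is_deriv01 (f : R -> R) (x l : R) : Prop :=
  forall eps, 0 < eps -> exists delta, 0 < delta /\
    forall y, 0 <= y <= 1 -> y <> x -> Rabs (y - x) < delta ->
      Rabs ((f y - f x) / (y - x) - l) < eps.

Definition diff01 (f : R -> R) (x : R) : Prop := exists l, is_deriv01 f x l.

Definition continuous01 (f : R -> R) (x : R) : Prop :=
  forall eps, 0 < eps -> exists delta, 0 < delta /\
    forall y, 0 <= y <= 1 -> Rabs (y - x) < delta -> Rabs (f y - f x) < eps.

(* g is of class C^k on the whole real line (every C^k[a,b] function
   extends to such a g, so "restriction of a C^k[a,b] function" is
   expressed as "agrees on [a,b] with a C^k(R) function") *)
Definition Ck (k : nat) (g : R -> R) : Prop :=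
  (forall j x, (j <= k)%nat -> ex_derive_n g j x) /\
  (forall x, continuous (Derive_n g k) x).

(* PC^k[0,1]: a partition 0 = x_0 < x_1 < ... < x_m = 1 of [0,1] into
   disjoint nondegenerate intervals, each breakpoint belonging to one of the
   two adjacent intervals; on each interval psi is the restriction of a C^k
   function. *)
Definition PCk (k : nat) (psi : R -> R) : Prop :=
  exists (m : nat) (x : nat -> R) (g : nat -> R -> R),
    (1 <= m)%nat /\ x 0%nat = 0 /\ x m = 1 /\
    (forall i, (i < m)%nat -> x i < x (S i)) /\
    (forall i, (i < m)%nat -> Ck k (g i)) /\
    (forall i y, (i < m)%nat -> x i < y < x (S i) -> psi y = g i y) /\
    psi 0 = g 0%nat 0 /\ psi 1 = g (pred m) 1 /\
    (forall i, (0 < i < m)%nat ->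
       psi (x i) = g (pred i) (x i) \/ psi (x i) = g i (x i)).

Definition supOn (a b : R) (f : R -> R) : Rbar :=
  Lub_Rbar (fun v => exists y, a <= y <= b /\ v = Rabs (f y)).

Fixpoint Ck_norm_on (k : nat) (g : R -> R) (a b : R) : Rbar :=
  match k with
  | O => supOn a b g
  | S k' => Rbar_plus (Ck_norm_on k' g a b) (supOn a b (Derive_n g k))
  end.

Definition PCk_norm (k : nat) (psi : R -> R) : Rbar :=
  Rbar_lub (fun v => exists a b g, 0 <= a < b /\ b <= 1 /\ Ck k g /\
              (forall y, a <= y <= b -> psi y = g y) /\
              v = Ck_norm_on k g a b).

(* psi in PC^{(2),1}[0,1] with psi_x = psi1 and psi_xx = psi2:
   psi in C^1[0,1] with derivative psi1, psi1 absolutely continuous with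
   (weak) derivative psi2 (so psi in H^2), and psi2 in PC^1[0,1]. *)
Definition PC21 (psi psi1 psi2 : R -> R) : Prop :=
  (forall x, 0 <= x <= 1 -> is_deriv01 psi x (psi1 x)) /\
  (forall x, 0 <= x <= 1 -> continuous01 psi1 x) /\
  PCk 1 psi2 /\
  (forall x, 0 <= x <= 1 -> psi1 x = psi1 0 + RInt psi2 0 x).

Definition PC21_norm (psi psi1 psi2 : R -> R) : Rbar :=
  Rbar_plus (Rbar_plus (supOn 0 1 psi) (supOn 0 1 psi1)) (PCk_norm 1 psi2).

Definition cont_PC21 (rho T : R) (xi xix xixx : R -> R -> R) : Prop :=
  forall t0, rho <= t0 <= T -> forall eps, 0 < eps -> exists delta, 0 < delta /\
    forall t, rho <= t <= T -> Rabs (t - t0) < delta ->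
      Rbar_lt (PC21_norm (fun x => xi x t - xi x t0)
                         (fun x => xix x t - xix x t0)
                         (fun x => xixx x t - xixx x t0)) eps.

(* phi in C^1([0,1]; C^1[0,1]), written with explicit partial derivatives:
   phi2 = d phi/d xt, phi1 = d phi/d x, phi12 = d phi1 / d xt; the
   derivative of x |-> phi(x,.) is taken in the C^1[0,1] norm (here the
   equivalent max-norm max(sup|f|, sup|f'|)) and is continuous in it. *)
Definition kernel_C1 (phi : R -> R -> R) : Prop :=
  exists phi1 phi2 phi12 : R -> R -> R,
    (forall x, 0 <= x <= 1 -> forall s, 0 <= s <= 1 ->
        is_deriv01 (phi x) s (phi2 x s) /\ continuous01 (phi2 x) s /\
        is_deriv01 (phi1 x) s (phi12 x s) /\ continuous01 (phi12 x) s) /\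
    (forall x, 0 <= x <= 1 -> forall eps, 0 < eps -> exists delta, 0 < delta /\
       forall y, 0 <= y <= 1 -> y <> x -> Rabs (y - x) < delta ->
       forall s, 0 <= s <= 1 ->
         Rabs ((phi y s - phi x s) / (y - x) - phi1 x s) <= eps /\
         Rabs ((phi2 y s - phi2 x s) / (y - x) - phi12 x s) <= eps) /\
    (forall x, 0 <= x <= 1 -> forall eps, 0 < eps -> exists delta, 0 < delta /\
       forall y, 0 <= y <= 1 -> Rabs (y - x) < delta ->
       forall s, 0 <= s <= 1 ->
         Rabs (phi1 y s - phi1 x s) <= eps /\
         Rabs (phi12 y s - phi12 x s) <= eps).

Definition inI (theta sigma lambda : R -> R) (x : R) : Prop :=
  0 <= x <= 1 /\ (~ diff01 theta x \/ ~ diff01 sigma x \/ ~ diff01 lambda x).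

Definition Pop (theta sigma lambda : R -> R) (phi : R -> R -> R)
  (w w1 w2 : R -> R) (x : R) : R :=
  theta x * w2 x + sigma x * w1 x + lambda x * w x
  + RInt (fun y => phi x y * w y) 0 x.

(* ---------- discretization (vectors/matrices indexed from 1 to n) ---------- *)

Definition hstep (n : nat) : R := / INR (S n).

Definition r0 (a0 b0 : R) (n : nat) : R := a0 / (3 * a0 - 2 * hstep n * b0).
Definition r1 (a1 b1 : R) (n : nat) : R := a1 / (3 * a1 + 2 * hstep n * b1).
Definition q0 (a0 b0 : R) (n : nat) : R := - b0 / (a0 - hstep n * b0).
Definition bn (theta : R -> R) (a1 b1 : R) (n : nat) : R :=
  2 * hstep n * theta (INR n * hstep n) / (3 * a1 + 2 * hstep n * b1).

Definition Mentry (a0 b0 a1 b1 : R) (n i j : nat) : R :=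
  if Nat.eqb i j then
    (if Nat.eqb i 1 then 4 * r0 a0 b0 n - 2
     else if Nat.eqb i n then 4 * r1 a1 b1 n - 2 else -2)
  else if Nat.eqb j (S i) then
    (if Nat.eqb i 1 then 1 - r0 a0 b0 n else 1)
  else if Nat.eqb i (S j) then
    (if Nat.eqb i n then 1 - r1 a1 b1 n else 1)
  else 0.

Definition Lentry (a0 b0 a1 b1 : R) (n i j : nat) : R :=
  Mentry a0 b0 a1 b1 n i j / (hstep n ^ 2).

Definition Nentry (a0 b0 : R) (n i j : nat) : R :=
  if Nat.eqb i 1 then (if Nat.eqb j 1 then hstep n * q0 a0 b0 n else 0)
  else if Nat.eqb j i then 1
  else if Nat.eqb i (S j) then -1
  else 0.

Definition Dentry (a0 b0 : R) (n i j : nat) : R := Nentry a0 b0 n i j / hstep n.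

Definition Phientry (phi : R -> R -> R) (n i j : nat) : R :=
  if Nat.leb j i then hstep n * phi (INR i * hstep n) (INR j * hstep n) else 0.

Definition deltaR (i j : nat) : R := if Nat.eqb i j then 1 else 0.

Definition Pentry (theta sigma lambda : R -> R) (phi : R -> R -> R)
  (a0 b0 a1 b1 : R) (n i j : nat) : R :=
  let xi := INR i * hstep n in
  theta xi * Lentry a0 b0 a1 b1 n i j + sigma xi * Dentry a0 b0 n i j
  + lambda xi * deltaR i j + Phientry phi n i j.

Definition Pn_apply (theta sigma lambda : R -> R) (phi : R -> R -> R)
  (a0 b0 a1 b1 : R) (n : nat) (v : nat -> R) (i : nat) : R :=
  sum_n_m (fun j => Pentry theta sigma lambda phi a0 b0 a1 b1 n i j * v j) 1 n.

Definition Bn (theta : R -> R) (a1 b1 : R) (n i : nat) : R :=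
  if Nat.eqb i n then bn theta a1 b1 n / (hstep n ^ 2) else 0.

Definition Rsample (n : nat) (z : R -> R) (i : nat) : R := z (INR i * hstep n).

Definition norm2d (n : nat) (v : nat -> R) : R :=
  sqrt (hstep n) * sqrt (sum_n_m (fun i => v i ^ 2) 1 n).

From Stdlib Require Import Reals Lra Lia ZArith Classical ClassicalEpsilon.
From Coquelicot Require Import Coquelicot.
Open Scope R_scope.

(* Row i of the error splits into theta(x_i) (xi_xx - second difference), sigma(x_i) (xi_x -
   backward difference) and the error of the right Riemann sum for the Volterra term; in the
   first and last rows the boundary conditions turn the modified entries r_0, q_0, r_1, b_n
   into the same stencils plus a multiple of a one-sided Taylor defect.  With M a bound for
   the PC^{(2),1} norm, Taylor's formula bounds a row by O(M h) when xi_xx is Lipschitz on the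
   stencil [x_{i-1}, x_{i+1}] and by O(M) otherwise.  Since xi_xx is non-differentiable only
   on the finite set I, at most 3 |I| rows are of the second kind, so for some constant A
   sum_i err_i^2 <= (A M)^2 (n h^2 + 3 |I|) <= (A M)^2 (1 + 3 |I|), and the factor sqrt h
   of the discrete norm gives the claim. *)

(** * Derivatives relative to [0,1] *)

Lemma is_deriv01_continuous01 (f : R -> R) x l : is_deriv01 f x l -> continuous01 f x.
Proof.
  intros H eps Heps.
  destruct (H 1 Rlt_0_1) as [d [Hd Hq]].
  assert (Hl : 0 < Rabs l + 1) by (pose proof (Rabs_pos l); lra).
  exists (Rmin d (eps / (Rabs l + 1))). split.
  { apply Rmin_pos; auto. apply Rdiv_lt_0_compat; lra. }
  intros y Hy Hyx.
  destruct (Req_dec y x) as [->|ne].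
  { rewrite Rminus_diag, Rabs_R0. auto. }
  assert (Hyx1 : Rabs (y - x) < d) by (eapply Rlt_le_trans; [exact Hyx| apply Rmin_l]).
  assert (Hyx2 : Rabs (y - x) * (Rabs l + 1) < eps).
  { apply (Rmult_lt_reg_r (/ (Rabs l + 1))). apply Rinv_0_lt_compat; lra.
    rewrite Rmult_assoc, Rinv_r, Rmult_1_r by lra.
    eapply Rlt_le_trans; [exact Hyx| apply Rmin_r]. }
  specialize (Hq y Hy ne Hyx1).
  replace (f y - f x) with (((f y - f x)/(y - x) - l) * (y - x) + l * (y - x)) by (field; lra).
  eapply Rle_lt_trans. apply Rabs_triang.
  rewrite !Rabs_mult.
  pose proof (Rabs_pos (y - x)). pose proof (Rabs_pos l).
  pose proof (Rabs_pos ((f y - f x) / (y - x) - l)).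
  nra.
Qed.

Lemma is_deriv01_is_derive f x l : 0 < x < 1 -> is_deriv01 f x l -> is_derive f x l.
Proof.
  intros Hx H. apply is_derive_Reals. intros eps Heps.
  destruct (H eps Heps) as [d [Hd Hq]].
  assert (Hp : 0 < Rmin d (Rmin x (1 - x))) by (repeat apply Rmin_pos; lra).
  exists (mkposreal _ Hp). intros h hne hlt. simpl in hlt.
  pose proof (Rmin_l d (Rmin x (1 - x))). pose proof (Rmin_r d (Rmin x (1 - x))).
  pose proof (Rmin_l x (1 - x)). pose proof (Rmin_r x (1 - x)).
  assert (Hy : 0 <= x + h <= 1) by (apply Rabs_def2 in hlt; lra).
  specialize (Hq (x + h) Hy ltac:(lra) ltac:(replace (x + h - x) with h by ring; lra)).
  replace (x + h - x) with h in Hq by ring. auto.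
Qed.

Lemma is_derive_is_deriv01 f x l : is_derive f x l -> is_deriv01 f x l.
Proof.
  intros H. apply is_derive_Reals in H. intros eps Heps.
  destruct (H eps Heps) as [d Hd]. exists d. split. apply cond_pos.
  intros y Hy ne hlt. specialize (Hd (y - x) ltac:(lra) hlt).
  replace (x + (y - x)) with y in Hd by ring. auto.
Qed.

Lemma is_deriv01_minus f g x a b : is_deriv01 f x a -> is_deriv01 g x b ->
  is_deriv01 (fun y => f y - g y) x (a - b).
Proof.
  intros Hf Hg eps Heps.
  destruct (Hf (eps/2) ltac:(lra)) as [d1 [Hd1 H1]].
  destruct (Hg (eps/2) ltac:(lra)) as [d2 [Hd2 H2]].
  exists (Rmin d1 d2). split. apply Rmin_pos; auto.
  intros y Hy ne hlt.
  pose proof (Rmin_l d1 d2). pose proof (Rmin_r d1 d2).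
  specialize (H1 y Hy ne ltac:(lra)). specialize (H2 y Hy ne ltac:(lra)).
  replace ((f y - g y - (f x - g x)) / (y - x) - (a - b)) with
    (((f y - f x)/(y-x) - a) - ((g y - g x)/(y-x) - b)) by (field; lra).
  eapply Rle_lt_trans. apply Rabs_triang. rewrite Rabs_Ropp. lra.
Qed.

Lemma increment_le_deriv01_bound_interior f df a b K : 0 < a -> a <= b -> b < 1 ->
  (forall u, a <= u <= b -> is_deriv01 f u (df u)) ->
  (forall u, a <= u <= b -> Rabs (df u) <= K) ->
  Rabs (f b - f a) <= K * (b - a).
Proof.
  intros Ha Hab Hb Hd HK.
  destruct (Req_dec a b) as [<-|ne].
  { rewrite !Rminus_diag, Rabs_R0. lra. }
  assert (Hder : forall x, a <= x <= b -> is_derive f x (df x))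
    by (intros x Hx; apply is_deriv01_is_derive; [lra | apply Hd; lra]).
  destruct (MVT_gen f a b df) as [c [Hc ->]].
  - intros x Hx. rewrite Rmin_left, Rmax_right in Hx by lra. apply Hder. lra.
  - intros x Hx. rewrite Rmin_left, Rmax_right in Hx by lra.
    apply derivable_continuous_pt. exists (df x). apply is_derive_Reals, Hder. lra.
  - rewrite Rmin_left, Rmax_right in Hc by lra.
    rewrite Rabs_mult, (Rabs_right (b - a)) by lra.
    apply Rmult_le_compat_r. lra. apply HK. lra.
Qed.

(* The endpoints are reached by continuity from slightly shrunk interior intervals. *)
Lemma increment_le_deriv01_bound f df a b K : 0 <= a -> a <= b -> b <= 1 ->
  (forall u, a <= u <= b -> is_deriv01 f u (df u)) ->
  (forall u, a <= u <= b -> Rabs (df u) <= K) ->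
  Rabs (f b - f a) <= K * (b - a).
Proof.
  intros Ha Hab Hb Hd HK.
  destruct (Req_dec a b) as [<-|ne].
  { rewrite !Rminus_diag, Rabs_R0. lra. }
  assert (HK0 : 0 <= K) by (eapply Rle_trans; [apply Rabs_pos| apply (HK a); lra]).
  apply Rle_plus_epsilon. intros eps Heps.
  destruct (is_deriv01_continuous01 f a (df a) (Hd a ltac:(lra)) (eps/2) ltac:(lra)) as [da [Hda Ca]].
  destruct (is_deriv01_continuous01 f b (df b) (Hd b ltac:(lra)) (eps/2) ltac:(lra)) as [db [Hdb Cb]].
  set (t := Rmin (Rmin da db) ((b - a)/3) / 2).
  assert (0 < Rmin (Rmin da db) ((b - a)/3)) by (repeat apply Rmin_pos; lra).
  pose proof (Rmin_l (Rmin da db) ((b-a)/3)). pose proof (Rmin_r (Rmin da db) ((b-a)/3)).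
  pose proof (Rmin_l da db). pose proof (Rmin_r da db).
  assert (Ht : 0 < t /\ t < da /\ t < db /\ t <= (b - a)/6) by (unfold t; lra).
  assert (E1 := increment_le_deriv01_bound_interior f df (a + t) (b - t) K ltac:(lra) ltac:(lra) ltac:(lra)
     ltac:(intros; apply Hd; lra) ltac:(intros; apply HK; lra)).
  assert (E2 := Ca (a + t) ltac:(lra) ltac:(rewrite Rabs_right by lra; lra)).
  assert (E3 := Cb (b - t) ltac:(lra) ltac:(rewrite Rabs_left by lra; lra)).
  replace (f b - f a) with ((f (b - t) - f (a + t)) - (f (b - t) - f b) + (f (a + t) - f a)) by ring.
  eapply Rle_trans. apply Rabs_triang. eapply Rle_trans. apply Rplus_le_compat_r. apply Rabs_triang.
  rewrite Rabs_Ropp.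
  assert (K * (b - t - (a + t)) <= K * (b - a)) by (apply Rmult_le_compat_l; lra).
  lra.
Qed.

Lemma deriv01_bound_lipschitz f df a b K : 0 <= a -> b <= 1 ->
  (forall u, a <= u <= b -> is_deriv01 f u (df u)) ->
  (forall u, a <= u <= b -> Rabs (df u) <= K) ->
  forall u v, a <= u <= b -> a <= v <= b -> Rabs (f u - f v) <= K * Rabs (u - v).
Proof.
  intros Ha Hb Hd HK u v Hu Hv.
  destruct (Rle_dec v u).
  - rewrite (Rabs_right (u - v)) by lra.
    apply (increment_le_deriv01_bound _ df); try lra; intros; [apply Hd | apply HK]; lra.
  - rewrite (Rabs_left (u - v)), <- Rabs_Ropp by lra.
    replace (- (f u - f v)) with (f v - f u) by ring. replace (- (u - v)) with (v - u) by ring.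
    apply (increment_le_deriv01_bound _ df); try lra; intros; [apply Hd | apply HK]; lra.
Qed.

Lemma sum_n_m_1_0 (a : nat -> R) : @eq R (sum_n_m a 1 0) 0.
Proof. rewrite sum_n_m_zero by lia. reflexivity. Qed.

Lemma sum_n_m_1_S (a : nat -> R) n : @eq R (sum_n_m a 1 (S n)) (sum_n_m a 1 n + a (S n)).
Proof. rewrite sum_n_Sm by lia. reflexivity. Qed.

Lemma sum_n_m_ext_locR (a b : nat -> R) n m :
  (forall k, (n <= k <= m)%nat -> a k = b k) -> @eq R (sum_n_m a n m) (sum_n_m b n m).
Proof. apply sum_n_m_ext_loc. Qed.

Lemma sum_n_m_plusR (u v : nat -> R) n m :
  @eq R (sum_n_m (fun k => u k + v k) n m) (sum_n_m u n m + sum_n_m v n m).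
Proof. apply (sum_n_m_plus u v). Qed.

Lemma sum_n_m_multR (c : R) (u : nat -> R) n m :
  @eq R (sum_n_m (fun k => c * u k) n m) (c * sum_n_m u n m).
Proof. apply (sum_n_m_mult_l c u). Qed.

Lemma sum_n_m_minusR (u v : nat -> R) n m :
  @eq R (sum_n_m (fun k => u k - v k) n m) (sum_n_m u n m - sum_n_m v n m).
Proof.
  rewrite (sum_n_m_ext_locR _ (fun k => u k + -1 * v k)) by (intros; ring).
  rewrite sum_n_m_plusR, sum_n_m_multR. ring.
Qed.

Lemma sum_n_m_constR (c : R) n : @eq R (sum_n_m (fun _ => c) 1 n) (INR n * c).
Proof. rewrite sum_n_m_const. replace (S n - 1)%nat with n by lia. reflexivity. Qed.

Lemma sum_n_m_le_loc (a b : nat -> R) n :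
  (forall k, (1 <= k <= n)%nat -> a k <= b k) -> sum_n_m a 1 n <= sum_n_m b 1 n.
Proof.
  intros H. induction n as [|n IH].
  - rewrite !sum_n_m_1_0; lra.
  - rewrite !sum_n_m_1_S. apply Rplus_le_compat; [apply IH; intros; apply H | apply H]; lia.
Qed.

Lemma Rabs_sum_n_m_le (a : nat -> R) n :
  Rabs (sum_n_m a 1 n) <= sum_n_m (fun k => Rabs (a k)) 1 n.
Proof. apply (norm_sum_n_m (V := R_NormedModule)). Qed.

Lemma sum_n_m_telescope (a : nat -> R) n :
  @eq R (sum_n_m (fun k => a k - a (k - 1)%nat) 1 n) (a n - a 0%nat).
Proof.
  induction n as [|n IH].
  - rewrite sum_n_m_1_0. ring.
  - rewrite sum_n_m_1_S, IH. replace (S n - 1)%nat with n by lia. ring.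
Qed.

Lemma sum_n_m_zero_loc (f : nat -> R) a b :
  (forall k, (a <= k <= b)%nat -> f k = 0) -> @eq R (sum_n_m f a b) 0.
Proof.
  intros H. rewrite (sum_n_m_ext_locR f (fun _ => 0)) by (intros; apply H; auto).
  apply (sum_n_m_const_zero (G := R_AbelianMonoid)).
Qed.

Lemma sum_n_m_single (f : nat -> R) a n : (1 <= a <= n)%nat ->
  @eq R (sum_n_m (fun j => if Nat.eqb j a then f j else 0) 1 n) (f a).
Proof.
  intros Ha. rewrite (sum_n_m_Chasles _ 1 (a - 1) n), (sum_n_m_Chasles _ (S (a - 1)) a n) by lia.
  replace (S (a - 1)) with a by lia. rewrite sum_n_n, Nat.eqb_refl.
  rewrite !sum_n_m_zero_loc; [change (0 + (f a + 0) = f a); ring | |];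
    intros k Hk; destruct (Nat.eqb_spec k a); auto; lia.
Qed.

Lemma sum_n_m_single_le a n : sum_n_m (fun j => (if Nat.eqb j a then 1 else 0) : R) 1 n <= 1.
Proof.
  destruct (le_lt_dec 1 a), (le_lt_dec a n).
  - rewrite sum_n_m_single by lia. lra.
  all: rewrite sum_n_m_zero_loc; [lra|]; intros k Hk; destruct (Nat.eqb_spec k a); auto; lia.
Qed.

Lemma partition_mono (m : nat) (x : nat -> R) :
  (forall i, (i < m)%nat -> x i < x (S i)) ->
  forall i j, (i <= j <= m)%nat -> x i <= x j.
Proof.
  intros H i j Hij. induction j as [|j IH].
  - replace i with 0%nat by lia. lra.
  - destruct (Nat.eq_dec i (S j)) as [->|]; [lra|].
    assert (x i <= x j) by (apply IH; lia). assert (x j < x (S j)) by (apply H; lia). lra.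
Qed.

Lemma partition_locate (m : nat) (x : nat -> R) :
  (forall i, (i < m)%nat -> x i < x (S i)) ->
  forall u, x 0%nat <= u <= x m ->
  (exists k, (k <= m)%nat /\ u = x k) \/ (exists k, (k < m)%nat /\ x k < u < x (S k)).
Proof.
  intros H. induction m as [|m IH]; intros u Hu.
  - left. exists 0%nat. split; [lia|lra].
  - destruct (Rle_dec u (x m)).
    + assert (x 0%nat <= x m) by (apply (partition_mono (S m)); auto; lia).
      destruct (IH ltac:(intros; apply H; lia) u ltac:(lra)) as [[k [Hk E]]|[k [Hk E]]].
      * left. exists k. split; [lia|auto].
      * right. exists k. split; [lia|auto].
    + destruct (Req_dec u (x (S m))).
      * left. exists (S m). split; [lia|auto].
      * right. exists m. split; [lia|lra].
Qed.

Lemma Ck1_ex_derive g : Ck 1 g -> forall y, ex_derive g y.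
Proof. intros [H _] y. exact (H 1%nat y (le_n 1)). Qed.

Lemma Ck1_continuous g : Ck 1 g -> forall y, continuous g y.
Proof. intros Hg y. exact (@ex_derive_continuous R_AbsRing R_NormedModule g y (Ck1_ex_derive g Hg y)). Qed.

Lemma continuous_bounded_on g a b : a <= b -> (forall y, continuous g y) ->
  exists B, forall y, a <= y <= b -> Rabs (g y) <= B.
Proof.
  intros Hab Hc.
  assert (Hc' : forall y, a <= y <= b -> continuity_pt g y)
    by (intros y _; apply continuity_pt_filterlim, Hc).
  destruct (continuity_ab_maj g a b Hab Hc') as [M1 [HM1 _]].
  destruct (continuity_ab_min g a b Hab Hc') as [M2 [HM2 _]].
  exists (Rabs (g M1) + Rabs (g M2)). intros y Hy.
  specialize (HM1 y Hy). specialize (HM2 y Hy).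
  pose proof (Rle_abs (g M1)). pose proof (Rle_abs (- g M2)). rewrite Rabs_Ropp in *.
  pose proof (Rabs_pos (g M1)). pose proof (Rabs_pos (g M2)).
  apply Rabs_le. lra.
Qed.

Lemma PCk1_bounded psi : PCk 1 psi -> exists B, 0 <= B /\ forall u, 0 <= u <= 1 -> Rabs (psi u) <= B.
Proof.
  intros [m [x [g [Hm [H0 [H1 [Hinc [Hck [Hin [Hp0 [Hp1 Hbr]]]]]]]]]]].
  assert (HB : forall m', (m' <= m)%nat -> exists B, 0 <= B /\ forall i y, (i < m')%nat ->
            x i <= y <= x (S i) -> Rabs (g i y) <= B).
  { induction m' as [|m' IH]; intros Hm'.
    - exists 0. split; [lra|]. intros; lia.
    - destruct (IH ltac:(lia)) as [B [HB0 HB]].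
      destruct (continuous_bounded_on (g m') (x m') (x (S m')) ltac:(apply Rlt_le, Hinc; lia)
                  (Ck1_continuous _ (Hck m' ltac:(lia)))) as [B' HB'].
      exists (Rmax B B'). split; [eapply Rle_trans; [exact HB0|apply Rmax_l]|].
      intros i y Hi Hy. destruct (Nat.eq_dec i m') as [->|].
      + eapply Rle_trans; [apply HB'; auto|apply Rmax_r].
      + eapply Rle_trans; [apply HB; auto; lia|apply Rmax_l]. }
  destruct (HB m (le_n m)) as [B [HB0 HBm]].
  exists B. split; auto. intros u Hu.
  assert (Hle : forall i j, (i <= j <= m)%nat -> x i <= x j) by (apply partition_mono; auto).
  destruct (partition_locate m x Hinc u ltac:(lra)) as [[k [Hk ->]]|[k [Hk E]]].
  - destruct (Nat.eq_dec k 0) as [->|].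
    + rewrite H0, Hp0. apply HBm; [lia|]. rewrite <- H0. split; [lra|apply Hle; lia].
    + destruct (Nat.eq_dec k m) as [->|].
      * rewrite H1, Hp1. apply HBm; [lia|].
        replace (S (pred m)) with m by lia. rewrite <- H1. split; [apply Hle; lia|lra].
      * destruct (Hbr k ltac:(lia)) as [E|E]; rewrite E; apply HBm; try lia.
        -- replace (S (pred k)) with k by lia. split; [apply Hle; lia|lra].
        -- split; [lra|apply Hle; lia].
  - rewrite (Hin k u Hk E). apply HBm; auto. lra.
Qed.

Lemma PCk1_local_piece psi : PCk 1 psi -> forall u, 0 <= u <= 1 ->
  exists a b g, 0 <= a < b /\ b <= 1 /\ a <= u <= b /\ Ck 1 g /\
    (forall y, a <= y <= b -> psi y = g y).
Proof.
  intros [m [x [g [Hm [H0 [H1 [Hinc [Hck [Hin [Hp0 [Hp1 Hbr]]]]]]]]]]] u Hu.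
  assert (Hx : forall i, (i <= m)%nat -> 0 <= x i <= 1).
  { intros i Hi. rewrite <- H0, <- H1. split; apply (partition_mono m); auto; lia. }
  assert (Hlt : forall i, (i < m)%nat -> x i < x (S i)) by auto.
  destruct (partition_locate m x Hinc u ltac:(lra)) as [[k [Hk ->]]|[k [Hk E]]].
  - destruct (Nat.eq_dec k 0) as [->|].
    + pose proof (Hlt 0%nat ltac:(lia)). pose proof (Hx 1%nat ltac:(lia)).
      exists 0, (x 1%nat / 2), (g 0%nat). rewrite H0 in *. do 3 (split; [lra|]). split; [apply Hck; lia|].
      intros y Hy. destruct (Req_dec y 0) as [->|]; auto. apply Hin; [lia|lra].
    + destruct (Nat.eq_dec k m) as [->|].
      * pose proof (Hlt (pred m) ltac:(lia)). pose proof (Hx (pred m) ltac:(lia)).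
        replace (S (pred m)) with m in * by lia.
        exists ((x (pred m) + 1)/2), 1, (g (pred m)). rewrite H1 in *.
        do 3 (split; [lra|]). split; [apply Hck; lia|].
        intros y Hy. destruct (Req_dec y 1) as [->|]; auto. apply Hin; [lia|].
        replace (S (pred m)) with m by lia. lra.
      * pose proof (Hlt (pred k) ltac:(lia)). pose proof (Hlt k ltac:(lia)).
        pose proof (Hx (pred k) ltac:(lia)). pose proof (Hx (S k) ltac:(lia)).
        replace (S (pred k)) with k in * by lia.
        destruct (Hbr k ltac:(lia)) as [E|E].
        -- exists ((x (pred k) + x k)/2), (x k), (g (pred k)).
           do 3 (split; [lra|]). split; [apply Hck; lia|].
           intros y Hy. destruct (Req_dec y (x k)) as [->|]; auto. apply Hin; [lia|].
           replace (S (pred k)) with k by lia. lra.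
        -- exists (x k), ((x k + x (S k))/2), (g k). do 3 (split; [lra|]). split; [apply Hck; lia|].
           intros y Hy. destruct (Req_dec y (x k)) as [->|]; auto. apply Hin; [lia|lra].
  - pose proof (Hx k ltac:(lia)). pose proof (Hx (S k) ltac:(lia)).
    exists u, ((u + x (S k))/2), (g k). do 3 (split; [lra|]). split; [apply Hck; lia|].
    intros y Hy. apply Hin; auto. lra.
Qed.

Lemma diff01_of_locally_eq psi g c d u : c < u < d -> 0 <= c -> d <= 1 ->
  (forall y, c < y < d -> psi y = g y) -> ex_derive g u -> diff01 psi u.
Proof.
  intros Hu Hc Hd Heq Hg. exists (Derive g u).
  apply Derive_correct, is_derive_Reals in Hg.
  intros eps Heps. destruct (Hg eps Heps) as [del Hdel].
  assert (Hpos : 0 < Rmin del (Rmin (u - c) (d - u))) by (repeat apply Rmin_pos; try lra; apply cond_pos).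
  exists (Rmin del (Rmin (u - c) (d - u))). split; auto.
  intros y Hy ne hlt.
  pose proof (Rmin_l del (Rmin (u - c) (d - u))). pose proof (Rmin_r del (Rmin (u - c) (d - u))).
  pose proof (Rmin_l (u - c) (d - u)). pose proof (Rmin_r (u - c) (d - u)).
  assert (Hy' : c < y < d) by (apply Rabs_def2 in hlt; lra).
  rewrite (Heq y), (Heq u) by lra.
  specialize (Hdel (y - u) ltac:(lra) ltac:(lra)). replace (u + (y - u)) with y in Hdel by ring. auto.
Qed.

Definition finitely_enumerable (P : R -> Prop) : Prop :=
  exists (b : nat -> R) (K : nat), forall u, P u -> exists k, (k < K)%nat /\ u = b k.

Lemma finitely_enumerable_or P Q : finitely_enumerable P -> finitely_enumerable Q ->
  finitely_enumerable (fun u => P u \/ Q u).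
Proof.
  intros [b [K Hb]] [c [L Hc]].
  exists (fun k => if (k <? K)%nat then b k else c (k - K)%nat), (K + L)%nat.
  intros u [Hu|Hu].
  - destruct (Hb u Hu) as [k [Hk ->]]. exists k. split; [lia|].
    destruct (Nat.ltb_spec k K); [auto|lia].
  - destruct (Hc u Hu) as [k [Hk ->]]. exists (K + k)%nat. split; [lia|].
    destruct (Nat.ltb_spec (K + k) K); [lia|]. do 2 f_equal. lia.
Qed.

Lemma finitely_enumerable_mono (P Q : R -> Prop) : (forall u, Q u -> P u) ->
  finitely_enumerable P -> finitely_enumerable Q.
Proof. intros H [b [K Hb]]. exists b, K. auto. Qed.

Lemma PCk1_nondiff_finite psi : PCk 1 psi ->
  finitely_enumerable (fun u => 0 <= u <= 1 /\ ~ diff01 psi u).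
Proof.
  intros [m [x [g [Hm [H0 [H1 [Hinc [Hck [Hin _]]]]]]]]]. exists x, (S m). intros u [Hu Hnd].
  destruct (partition_locate m x Hinc u ltac:(lra)) as [[k [Hk ->]]|[k [Hk E]]].
  { exists k. split; [lia|auto]. }
  exfalso. apply Hnd.
  assert (0 <= x k /\ x (S k) <= 1) as [].
  { rewrite <- H0, <- H1. split; apply (partition_mono m); auto; lia. }
  apply (diff01_of_locally_eq psi (g k) (x k) (x (S k))); auto.
  apply Ck1_ex_derive, Hck; auto.
Qed.

Lemma PCk1_ex_RInt psi : PCk 1 psi -> ex_RInt psi 0 1.
Proof.
  intros [m [x [g [Hm [H0 [H1 [Hinc [Hck [Hin _]]]]]]]]].
  assert (forall j, (j <= m)%nat -> ex_RInt psi 0 (x j)).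
  { induction j as [|j IH]; intros Hj.
    - rewrite H0. apply ex_RInt_point.
    - apply (ex_RInt_Chasles _ _ (x j)); [apply IH; lia|].
      apply (ex_RInt_ext (g j)).
      + intros y Hy. rewrite Rmin_left, Rmax_right in Hy by (apply Rlt_le, Hinc; lia).
        symmetry. apply Hin; auto.
      + apply (ex_RInt_continuous (V := R_CompleteNormedModule)).
        intros; apply Ck1_continuous, Hck; lia. }
  rewrite <- H1. auto.
Qed.

Lemma is_deriv01_locally_eq_Derive psi g a b u l : a < b -> a <= u <= b -> 0 <= a -> b <= 1 ->
  (forall y, a <= y <= b -> psi y = g y) -> ex_derive g u -> is_deriv01 psi u l -> l = Derive g u.
Proof.
  intros Hab Hu Ha Hb Heq Hd Hl.
  apply Derive_correct, is_derive_Reals in Hd.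
  apply Rminus_diag_uniq, Rabs_eq_0, Rle_antisym; [|apply Rabs_pos].
  apply Rle_plus_epsilon. intros eps Heps. rewrite Rplus_0_l.
  destruct (Hl (eps/2) ltac:(lra)) as [d1 [Hd1 H1]].
  destruct (Hd (eps/2) ltac:(lra)) as [d2 H2].
  pose proof (cond_pos d2).
  set (t := Rmin (Rmin d1 d2) (b - a) / 2).
  pose proof (Rmin_l (Rmin d1 d2) (b-a)). pose proof (Rmin_r (Rmin d1 d2) (b-a)).
  pose proof (Rmin_l d1 d2). pose proof (Rmin_r d1 d2).
  assert (0 < Rmin (Rmin d1 d2) (b - a)) by (repeat apply Rmin_pos; lra).
  assert (Ht : 0 < t /\ t < d1 /\ t < d2 /\ t <= (b - a)/2) by (unfold t; lra).
  (* step from [u] to the side that stays inside [[a, b]] *)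
  set (s := if Rle_dec (u + t) b then t else - t).
  assert (Hs : s <> 0 /\ Rabs s < d1 /\ Rabs s < d2 /\ a <= u + s <= b).
  { unfold s. destruct Rle_dec; [rewrite Rabs_right | rewrite Rabs_left]; lra. }
  specialize (H1 (u + s) ltac:(lra) ltac:(lra) ltac:(replace (u + s - u) with s by ring; lra)).
  specialize (H2 s ltac:(lra) ltac:(lra)).
  rewrite (Heq (u + s)), (Heq u) in H1 by lra. replace (u + s - u) with s in H1 by ring.
  replace (l - Derive g u) with (((g (u + s) - g u)/s - Derive g u) - ((g (u + s) - g u)/s - l)) by ring.
  eapply Rle_trans. apply Rabs_triang. rewrite Rabs_Ropp. lra.
Qed.

Lemma Rbar_lub_ub (E : Rbar -> Prop) v : E v -> Rbar_le v (Rbar_lub E).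
Proof.
  intros H. unfold Rbar_lub. destruct (Rbar_ex_lub E) as [l Hl]. apply (proj1 Hl). auto.
Qed.

Lemma supOn_ge a b f y : a <= y <= b -> Rbar_le (Rabs (f y)) (supOn a b f).
Proof.
  intros Hy. apply (proj1 (Lub_Rbar_correct (fun v => exists y, a <= y <= b /\ v = Rabs (f y)))).
  exists y. auto.
Qed.

Lemma supOn_le a b f (M : R) y : Rbar_le (supOn a b f) M -> a <= y <= b -> Rabs (f y) <= M.
Proof. intros H Hy. exact (Rbar_le_trans (Rabs (f y)) _ M (supOn_ge a b f y Hy) H). Qed.

Lemma Rbar_plus_ge_Finite x y (a b : R) : Rbar_le a x -> Rbar_le b y ->
  Rbar_le (a + b) (Rbar_plus x y).
Proof. intros. apply (Rbar_plus_le_compat (Finite a) x (Finite b) y); auto. Qed.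

Lemma Rbar_plus_le_Finite_inv x y (M a b : R) : Rbar_le a x -> Rbar_le b y ->
  Rbar_le (Rbar_plus x y) M ->
  exists x' y', x = Finite x' /\ y = Finite y' /\ x' + y' <= M /\ a <= x' /\ b <= y'.
Proof.
  destruct x as [x'| |]; destruct y as [y'| |]; simpl; intros H1 H2 H3; try tauto.
  exists x', y'. auto.
Qed.

Lemma Ck_norm_on_1_ge g a b u : a <= u <= b ->
  Rbar_le (Rabs (g u) + Rabs (Derive g u)) (Ck_norm_on 1 g a b).
Proof. intros Hu. apply Rbar_plus_ge_Finite; apply (supOn_ge a b _ u Hu). Qed.

Lemma Ck_norm_on_le_PCk_norm psi a b g : 0 <= a < b -> b <= 1 -> Ck 1 g ->
  (forall y, a <= y <= b -> psi y = g y) ->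
  Rbar_le (Ck_norm_on 1 g a b) (PCk_norm 1 psi).
Proof. intros. apply Rbar_lub_ub. exists a, b, g. auto. Qed.

Lemma PCk_norm_nonneg psi : PCk 1 psi -> Rbar_le 0 (PCk_norm 1 psi).
Proof.
  intros HP. destruct (PCk1_local_piece psi HP 0 ltac:(lra)) as [a [b [g [Hab [Hb [Hu [Hg Heq]]]]]]].
  eapply Rbar_le_trans; [|apply (Ck_norm_on_le_PCk_norm psi a b g); auto].
  eapply Rbar_le_trans; [|apply (Ck_norm_on_1_ge g a b a); lra].
  simpl. pose proof (Rabs_pos (g a)). pose proof (Rabs_pos (Derive g a)). lra.
Qed.

Lemma PC21_norm_nonneg w w1 w2 : PC21 w w1 w2 -> Rbar_le 0 (PC21_norm w w1 w2).
Proof.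
  intros [_ [_ [HP _]]].
  eapply Rbar_le_trans; [|apply Rbar_plus_ge_Finite;
    [apply Rbar_plus_ge_Finite; apply (supOn_ge 0 1 _ 0); lra | apply PCk_norm_nonneg; auto]].
  simpl. pose proof (Rabs_pos (w 0)). pose proof (Rabs_pos (w1 0)). lra.
Qed.

Record PC21_bounded (w w1 w2 : R -> R) (M : R) : Prop := {
  bnd_w : forall u, 0 <= u <= 1 -> Rabs (w u) <= M;
  bnd_w1 : forall u, 0 <= u <= 1 -> Rabs (w1 u) <= M;
  bnd_w2 : forall u, 0 <= u <= 1 -> Rabs (w2 u) <= M;
  bnd_dw2 : forall u l, 0 <= u <= 1 -> is_deriv01 w2 u l -> Rabs l <= M
}.

Lemma PC21_bounded_nonneg w w1 w2 M : PC21_bounded w w1 w2 M -> 0 <= M.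
Proof. intros HB. pose proof (bnd_w _ _ _ _ HB 0 ltac:(lra)). pose proof (Rabs_pos (w 0)). lra. Qed.

Lemma PC21_norm_le_bounded w w1 w2 (M : R) : PC21 w w1 w2 -> Rbar_le (PC21_norm w w1 w2) M ->
  PC21_bounded w w1 w2 M.
Proof.
  intros HPC HM. pose proof HPC as [_ [_ [HP _]]].
  assert (A0 := supOn_ge 0 1 w 0 ltac:(lra)).
  assert (A1 := supOn_ge 0 1 w1 0 ltac:(lra)).
  destruct (Rbar_plus_le_Finite_inv _ _ M _ _ (Rbar_plus_ge_Finite _ _ _ _ A0 A1) (PCk_norm_nonneg w2 HP) HM)
    as [s01 [p [E01 [Ep [Hsp [H01 Hp]]]]]].
  assert (HH : Rbar_le (Rbar_plus (supOn 0 1 w) (supOn 0 1 w1)) s01) by (rewrite E01; simpl; lra).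
  destruct (Rbar_plus_le_Finite_inv _ _ s01 _ _ A0 A1 HH) as [s0 [s1 [E0 [E1 [Hs [Hs0 Hs1]]]]]].
  pose proof (Rabs_pos (w 0)). pose proof (Rabs_pos (w1 0)).
  assert (Hpiece : forall u, 0 <= u <= 1 -> exists g, w2 u = g u /\
            (forall l, is_deriv01 w2 u l -> l = Derive g u) /\ Rabs (g u) + Rabs (Derive g u) <= M).
  { intros u Hu. destruct (PCk1_local_piece w2 HP u Hu) as [a [b [g [Hab [Hb [Hua [Hg Heq]]]]]]].
    exists g. split; [auto|]. split.
    - intros l Hl. apply (is_deriv01_locally_eq_Derive w2 g a b); auto; try lra.
      apply Ck1_ex_derive; auto.
    - pose proof (Rbar_le_trans _ _ _ (Ck_norm_on_1_ge g a b u Hua) (Ck_norm_on_le_PCk_norm w2 a b g Hab Hb Hg Heq)) as X.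
      rewrite Ep in X. simpl in X. lra. }
  split.
  - intros u Hu. apply (supOn_le 0 1 w M u); auto. rewrite E0. simpl. lra.
  - intros u Hu. apply (supOn_le 0 1 w1 M u); auto. rewrite E1. simpl. lra.
  - intros u Hu. destruct (Hpiece u Hu) as [g [-> [_ Hg]]]. pose proof (Rabs_pos (Derive g u)). lra.
  - intros u l Hu Hl. destruct (Hpiece u Hu) as [g [_ [Hd Hg]]]. rewrite (Hd l Hl).
    pose proof (Rabs_pos (g u)). lra.
Qed.

(** * Taylor estimates for PC^{(2),1} functions *)

Definition lipschitz_on (f : R -> R) (L a b : R) : Prop :=
  forall y z, a <= y <= b -> a <= z <= b -> Rabs (f y - f z) <= L * Rabs (y - z).

Lemma ex_RInt_sub01 (f : R -> R) u v : ex_RInt f 0 1 -> 0 <= u <= 1 -> 0 <= v <= 1 -> ex_RInt f u v.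
Proof.
  intros H Hu Hv.
  assert (G : forall a b, 0 <= a <= b -> b <= 1 -> ex_RInt f a b).
  { intros a b Hab Hb. apply (ex_RInt_Chasles_1 (V := R_CompleteNormedModule) _ _ _ 1); [lra|].
    apply (ex_RInt_Chasles_2 (V := R_CompleteNormedModule) _ 0); [lra|auto]. }
  destruct (Rle_dec u v); [apply G; lra | apply ex_RInt_swap, G; lra].
Qed.

Lemma Rabs_RInt_le_const01 (f : R -> R) u v K : 0 <= u <= 1 -> 0 <= v <= 1 -> ex_RInt f 0 1 ->
  (forall y, Rmin u v <= y <= Rmax u v -> Rabs (f y) <= K) ->
  Rabs (RInt f u v) <= K * Rabs (v - u).
Proof.
  intros Hu Hv Hex HK. destruct (Rle_dec u v).
  - rewrite Rmin_left, Rmax_right in HK by lra. rewrite (Rabs_right (v - u)) by lra.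
    rewrite Rmult_comm. apply abs_RInt_le_const; auto. apply ex_RInt_sub01; auto.
  - rewrite Rmin_right, Rmax_left in HK by lra. rewrite (Rabs_left (v - u)) by lra.
    rewrite <- opp_RInt_swap by (apply ex_RInt_sub01; auto).
    change (Rabs (- RInt f v u) <= K * - (v - u)). rewrite Rabs_Ropp.
    replace (- (v - u)) with (u - v) by ring.
    rewrite Rmult_comm. apply abs_RInt_le_const; auto; [lra | apply ex_RInt_sub01; auto].
Qed.

Lemma Rabs_between_le u c y : Rmin c u <= y <= Rmax c u -> Rabs (y - c) <= Rabs (u - c).
Proof.
  intros Hy. destruct (Rle_dec c u).
  - rewrite Rmin_left, Rmax_right in Hy by lra. rewrite !Rabs_right by lra. lra.
  - rewrite Rmin_right, Rmax_left in Hy by lra. rewrite !Rabs_left1 by lra. lra.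
Qed.

Section Taylor.

Variables (w w1 w2 : R -> R) (M : R).
Hypothesis Hw : PC21 w w1 w2.
Hypothesis Hbd : PC21_bounded w w1 w2 M.

Let HM : 0 <= M := PC21_bounded_nonneg w w1 w2 M Hbd.

Lemma w1_increment u v : 0 <= u <= 1 -> 0 <= v <= 1 -> w1 v - w1 u = RInt w2 u v.
Proof.
  destruct Hw as [_ [_ [HP HI]]]. intros Hu Hv. pose proof (PCk1_ex_RInt w2 HP) as Hex.
  rewrite (HI v Hv), (HI u Hu), <- (RInt_Chasles w2 0 u v) by (apply ex_RInt_sub01; auto; lra).
  change (plus (RInt w2 0 u) (RInt w2 u v)) with (RInt w2 0 u + RInt w2 u v). ring.
Qed.

Lemma w_lipschitz : lipschitz_on w M 0 1.
Proof.
  destruct Hw as [HD _]. intros y z Hy Hz.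
  apply (deriv01_bound_lipschitz w w1 0 1 M); auto; try lra; apply bnd_w1 with w w2; auto.
Qed.

Lemma w1_lipschitz : lipschitz_on w1 M 0 1.
Proof.
  intros u v Hu Hv. rewrite (w1_increment v u Hv Hu).
  pose proof Hw as [_ [_ [HP _]]].
  apply Rabs_RInt_le_const01; auto. apply PCk1_ex_RInt; auto.
  intros y Hy. apply (bnd_w2 _ _ _ _ Hbd).
  pose proof (Rmin_glb v u 0). pose proof (Rmax_lub v u 1). lra.
Qed.

Lemma w1_linear_error a b u v c : 0 <= a -> b <= 1 -> lipschitz_on w2 M a b ->
  a <= u <= b -> a <= v <= b -> a <= c <= b ->
  Rabs (w1 v - w1 u - w2 c * (v - u)) <= M * (b - a) * Rabs (v - u).
Proof.
  intros Ha Hb HL Hu Hv Hc.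
  rewrite (w1_increment u v) by lra.
  pose proof Hw as [_ [_ [HP _]]]. pose proof (PCk1_ex_RInt w2 HP) as Hex.
  assert (E : RInt w2 u v - w2 c * (v - u) = RInt (fun y => w2 y - w2 c) u v).
  { rewrite (RInt_minus (V := R_CompleteNormedModule) w2 (fun _ => w2 c));
      [| apply ex_RInt_sub01; [exact Hex|lra|lra] | apply ex_RInt_const].
    rewrite RInt_const. change (RInt w2 u v - w2 c * (v - u) = RInt w2 u v - (v - u) * w2 c). ring. }
  rewrite E. apply Rabs_RInt_le_const01; try lra.
  - apply (ex_RInt_minus (V := R_NormedModule) w2 (fun _ => w2 c)); auto. apply ex_RInt_const.
  - intros y Hy. pose proof (Rmin_glb u v a). pose proof (Rmax_lub u v b).
    eapply Rle_trans; [apply HL; lra|]. apply Rmult_le_compat_l; [lra|]. apply Rabs_le. lra.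
Qed.

Lemma taylor_order1 c u : 0 <= c <= 1 -> 0 <= u <= 1 ->
  Rabs (w u - w c - (u - c) * w1 c) <= M * (u - c)^2.
Proof.
  intros Hc Hu. pose proof Hw as [HD _].
  pose proof (Rmin_l c u). pose proof (Rmin_r c u). pose proof (Rmax_l c u). pose proof (Rmax_r c u).
  pose proof (Rmin_glb c u 0). pose proof (Rmax_lub c u 1).
  assert (HL := deriv01_bound_lipschitz (fun y => w y - w1 c * y) (fun y => w1 y - w1 c)
    (Rmin c u) (Rmax c u) (M * Rabs (u - c)) ltac:(lra) ltac:(lra)).
  specialize (HL ltac:(intros y Hy; apply is_deriv01_minus; [apply HD; lra |
    apply is_derive_is_deriv01; auto_derive; auto; ring])).
  specialize (HL ltac:(intros y Hy; eapply Rle_trans; [apply w1_lipschitz; lra|];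
    apply Rmult_le_compat_l; [lra | apply Rabs_between_le; auto])).
  specialize (HL u c ltac:(lra) ltac:(lra)).
  replace (w u - w c - (u - c) * w1 c) with (w u - w1 c * u - (w c - w1 c * c)) by ring.
  eapply Rle_trans; [apply HL|]. right. rewrite Rmult_assoc, <- Rabs_mult, Rabs_right by (apply Rle_ge, Rle_0_sqr). ring.
Qed.

Lemma taylor_order2 a b c u : 0 <= a -> b <= 1 -> lipschitz_on w2 M a b ->
  a <= c <= b -> a <= u <= b ->
  Rabs (w u - w c - (u - c) * w1 c - (u - c)^2 / 2 * w2 c) <= M * (b - a) * (u - c)^2.
Proof.
  intros Ha Hb HL Hc Hu. pose proof Hw as [HD _].
  pose proof (Rmin_l c u). pose proof (Rmin_r c u). pose proof (Rmax_l c u). pose proof (Rmax_r c u).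
  pose proof (Rmin_glb c u a). pose proof (Rmax_lub c u b).
  assert (HT := deriv01_bound_lipschitz (fun y => w y - (w1 c * y + w2 c * (y - c)^2 / 2))
    (fun y => w1 y - (w1 c + w2 c * (y - c))) (Rmin c u) (Rmax c u) (M * (b - a) * Rabs (u - c))
    ltac:(lra) ltac:(lra)).
  specialize (HT ltac:(intros y Hy; apply is_deriv01_minus; [apply HD; lra |
    apply is_derive_is_deriv01; auto_derive; auto; field])).
  specialize (HT ltac:(intros y Hy; cbv beta;
    replace (w1 y - (w1 c + w2 c * (y - c))) with (w1 y - w1 c - w2 c * (y - c)) by ring;
    eapply Rle_trans; [apply (w1_linear_error a b c y c Ha Hb HL); lra|];
    apply Rmult_le_compat_l; [apply Rmult_le_pos; lra | apply Rabs_between_le; auto])).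
  specialize (HT u c ltac:(lra) ltac:(lra)).
  replace (w u - w c - (u - c) * w1 c - (u - c)^2 / 2 * w2 c) with
    (w u - (w1 c * u + w2 c * (u - c)^2 / 2) - (w c - (w1 c * c + w2 c * (c - c)^2 / 2))) by field.
  eapply Rle_trans; [apply HT|]. right. rewrite Rmult_assoc, <- Rabs_mult, Rabs_right by (apply Rle_ge, Rle_0_sqr). ring.
Qed.

Lemma w2_lipschitz_of_diff01 a b : 0 <= a -> b <= 1 ->
  (forall y, a <= y <= b -> diff01 w2 y) -> lipschitz_on w2 M a b.
Proof.
  intros Ha Hb Hd y z Hy Hz.
  set (df := fun u => epsilon (inhabits 0) (fun l => is_deriv01 w2 u l)).
  assert (Hdf : forall u, a <= u <= b -> is_deriv01 w2 u (df u))
    by (intros u Hu; apply epsilon_spec, Hd, Hu).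
  apply (deriv01_bound_lipschitz w2 df a b M Ha Hb Hdf); auto.
  intros u Hu. apply (bnd_dw2 _ _ _ _ Hbd u); [lra | apply Hdf; auto].
Qed.


Lemma backward_difference_error c h : 0 < h -> 0 <= c - h -> c <= 1 ->
  Rabs (w1 c - (w c - w (c - h)) / h) <= M * h.
Proof.
  intros Hh H1 H2. pose proof (taylor_order1 c (c - h) ltac:(lra) ltac:(lra)) as T.
  replace (w1 c - (w c - w (c - h)) / h) with ((w (c - h) - w c - (c - h - c) * w1 c) / h) by (field; lra).
  unfold Rdiv. rewrite Rabs_mult, Rabs_inv, (Rabs_right h) by lra.
  apply (Rmult_le_reg_r h); auto. rewrite Rmult_assoc, Rinv_l by lra.
  replace (M * h * h) with (M * (c - h - c)^2) by ring. lra.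
Qed.

Lemma second_difference_crude c h : 0 < h -> 0 <= c - h -> c + h <= 1 ->
  Rabs (w (c - h) - 2 * w c + w (c + h)) <= 2 * M * h^2.
Proof.
  intros Hh H1 H2.
  pose proof (taylor_order1 c (c - h) ltac:(lra) ltac:(lra)) as T1.
  pose proof (taylor_order1 c (c + h) ltac:(lra) ltac:(lra)) as T2.
  replace (w (c - h) - 2 * w c + w (c + h)) with
    ((w (c - h) - w c - (c - h - c) * w1 c) + (w (c + h) - w c - (c + h - c) * w1 c)) by ring.
  eapply Rle_trans. apply Rabs_triang.
  replace ((c - h - c)^2) with (h^2) in T1 by ring. replace ((c + h - c)^2) with (h^2) in T2 by ring. lra.
Qed.

Lemma second_difference_sharp c h : 0 < h -> 0 <= c - h -> c + h <= 1 ->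
  lipschitz_on w2 M (c - h) (c + h) ->
  Rabs (w (c - h) - 2 * w c + w (c + h) - h^2 * w2 c) <= 4 * M * h^3.
Proof.
  intros Hh H1 H2 HL.
  pose proof (taylor_order2 (c - h) (c + h) c (c - h) H1 H2 HL ltac:(lra) ltac:(lra)) as T1.
  pose proof (taylor_order2 (c - h) (c + h) c (c + h) H1 H2 HL ltac:(lra) ltac:(lra)) as T2.
  replace (w (c - h) - 2 * w c + w (c + h) - h^2 * w2 c) with
    ((w (c - h) - w c - (c - h - c) * w1 c - (c - h - c)^2/2 * w2 c)
     + (w (c + h) - w c - (c + h - c) * w1 c - (c + h - c)^2/2 * w2 c)) by field.
  eapply Rle_trans. apply Rabs_triang.
  replace (M * (c + h - (c - h)) * (c - h - c)^2) with (2 * M * h^3) in T1 by ring.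
  replace (M * (c + h - (c - h)) * (c + h - c)^2) with (2 * M * h^3) in T2 by ring. lra.
Qed.

(* [one_sided_defect c d / (2 d)] is the error of the one-sided difference
   [(4 w(c+d) - w(c+2d) - 3 w(c)) / (2d)] for [w'(c)]; with [d = ± h] it is what the
   first and last rows of [L_n] leave over once the boundary conditions are substituted. *)
Definition one_sided_defect (c d : R) : R :=
  4 * (w (c + d) - w c - d * w1 c) - (w (c + 2 * d) - w c - 2 * d * w1 c).

Lemma one_sided_defect_crude c d : 0 <= c <= 1 -> 0 <= c + d <= 1 -> 0 <= c + 2 * d <= 1 ->
  Rabs (one_sided_defect c d) <= 8 * M * d^2.
Proof.
  intros Hc H1 H2. unfold one_sided_defect.
  pose proof (taylor_order1 c (c + d) Hc H1) as T1.
  pose proof (taylor_order1 c (c + 2 * d) Hc H2) as T2.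
  replace (c + d - c) with d in T1 by ring. replace (c + 2 * d - c) with (2 * d) in T2 by ring.
  eapply Rle_trans. apply Rabs_triang. rewrite Rabs_Ropp, Rabs_mult, (Rabs_right 4) by lra.
  replace ((2 * d)^2) with (4 * d^2) in T2 by ring. lra.
Qed.

Lemma one_sided_defect_sharp a b c d : 0 <= a -> b <= 1 -> lipschitz_on w2 M a b ->
  a <= c <= b -> a <= c + d <= b -> a <= c + 2 * d <= b ->
  Rabs (one_sided_defect c d) <= 8 * M * (b - a) * d^2.
Proof.
  intros Ha Hb HL Hc H1 H2. unfold one_sided_defect.
  pose proof (taylor_order2 a b c (c + d) Ha Hb HL Hc H1) as T1.
  pose proof (taylor_order2 a b c (c + 2 * d) Ha Hb HL Hc H2) as T2.
  replace (c + d - c) with d in T1 by ring. replace (c + 2 * d - c) with (2 * d) in T2 by ring.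
  replace (4 * (w (c + d) - w c - d * w1 c) - (w (c + 2 * d) - w c - 2 * d * w1 c)) with
   (4 * (w (c + d) - w c - d * w1 c - d^2/2 * w2 c)
    - (w (c + 2 * d) - w c - 2 * d * w1 c - (2 * d)^2/2 * w2 c)) by field.
  eapply Rle_trans. apply Rabs_triang. rewrite Rabs_Ropp, Rabs_mult, (Rabs_right 4) by lra.
  replace (M * (b - a) * (2 * d)^2) with (4 * (M * (b - a) * d^2)) in T2 by ring. lra.
Qed.

End Taylor.

(** * Uniform bounds for the kernel *)

Definition clamp01 (x : R) : R := Rmax 0 (Rmin 1 x).

Lemma clamp01_in x : 0 <= clamp01 x <= 1.
Proof. unfold clamp01, Rmax, Rmin. repeat destruct Rle_dec; lra. Qed.

Lemma clamp01_id x : 0 <= x <= 1 -> clamp01 x = x.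
Proof. unfold clamp01, Rmax, Rmin. intros. repeat destruct Rle_dec; lra. Qed.

Lemma clamp01_contract x y : Rabs (clamp01 x - clamp01 y) <= Rabs (x - y).
Proof.
  unfold clamp01, Rmax, Rmin. repeat destruct Rle_dec; unfold Rabs; repeat destruct Rcase_abs; lra.
Qed.

Lemma continuous01_bounded f : (forall x, 0 <= x <= 1 -> continuous01 f x) ->
  exists B, forall x, 0 <= x <= 1 -> Rabs (f x) <= B.
Proof.
  intros Hc.
  assert (Hcl : forall y, continuous (fun z => f (clamp01 z)) y).
  { intros y. apply continuity_pt_filterlim. intros eps Heps.
    destruct (Hc (clamp01 y) (clamp01_in y) eps Heps) as [d [Hd Hf]].
    exists d. split; auto. intros z [_ Hz]. simpl in *. unfold R_dist in *.
    apply Hf; [apply clamp01_in|]. eapply Rle_lt_trans; [apply clamp01_contract | auto]. }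
  destruct (continuous_bounded_on _ 0 1 ltac:(lra) Hcl) as [B HB].
  exists B. intros x Hx. rewrite <- (clamp01_id x Hx). apply HB, Hx.
Qed.

Lemma local_equicontinuity_of_uniform_derivative (F F' : R -> R -> R) x :
  0 <= x <= 1 -> (exists B, forall s, 0 <= s <= 1 -> Rabs (F' x s) <= B) ->
  (exists d, 0 < d /\ forall y, 0 <= y <= 1 -> y <> x -> Rabs (y - x) < d ->
     forall s, 0 <= s <= 1 -> Rabs ((F y s - F x s) / (y - x) - F' x s) <= 1) ->
  exists d, 0 < d /\ forall y, 0 <= y <= 1 -> Rabs (y - x) < d ->
    forall s, 0 <= s <= 1 -> Rabs (F y s - F x s) <= 1.
Proof.
  intros Hx [B HB] [d [Hd Hq]].
  assert (B0 : 0 <= B) by (eapply Rle_trans; [apply Rabs_pos|apply (HB 0); lra]).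
  exists (Rmin d (1 / (B + 1))). split; [apply Rmin_pos; auto; apply Rdiv_lt_0_compat; lra|].
  intros y Hy Hyx s Hs. destruct (Req_dec y x) as [->|ne].
  { rewrite Rminus_diag, Rabs_R0. lra. }
  assert (h1 : Rabs (y - x) < d) by (eapply Rlt_le_trans; [exact Hyx|apply Rmin_l]).
  assert (h2 : Rabs (y - x) * (B + 1) <= 1).
  { assert (Rabs (y - x) < 1 / (B + 1)) by (eapply Rlt_le_trans; [exact Hyx|apply Rmin_r]).
    apply Rmult_lt_compat_r with (r := B + 1) in H; [|lra]. unfold Rdiv in H.
    rewrite Rmult_1_l, Rinv_l in H by lra. lra. }
  specialize (Hq y Hy ne h1 s Hs). specialize (HB s Hs).
  replace (F y s - F x s) with (((F y s - F x s)/(y - x) - F' x s) * (y - x) + F' x s * (y - x)) by (field; lra).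
  eapply Rle_trans. apply Rabs_triang. rewrite !Rabs_mult.
  pose proof (Rabs_pos (y - x)). pose proof (Rabs_pos (F' x s)).
  pose proof (Rabs_pos ((F y s - F x s) / (y - x) - F' x s)). nra.
Qed.

(* Heine's argument: a Lebesgue number for the cover by the radii of local equicontinuity. *)
Lemma uniform_equicontinuity01 (G : R -> R -> R) :
  (forall x, 0 <= x <= 1 -> exists d, 0 < d /\ forall y, 0 <= y <= 1 -> Rabs (y - x) < d ->
      forall s, 0 <= s <= 1 -> Rabs (G y s - G x s) <= 1) ->
  exists d : posreal, forall x y s, 0 <= x <= 1 -> 0 <= y <= 1 -> 0 <= s <= 1 ->
    Rabs (x - y) < d -> Rabs (G x s - G y s) <= 2.
Proof.
  intros Hloc.
  set (P := fun t d => 0 < d /\ forall y, 0 <= y <= 1 -> Rabs (y - t) < d ->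
      forall s, 0 <= s <= 1 -> Rabs (G y s - G t s) <= 1).
  set (del := fun t => epsilon (inhabits 1) (P t)).
  assert (Hdel : forall t, 0 <= t <= 1 -> P t (del t)) by (intros t Ht; apply epsilon_spec, Hloc, Ht).
  set (rad := fun t => if Rle_dec 0 t then if Rle_dec t 1 then del t / 2 else 1 else 1).
  assert (Hrad : forall t, 0 < rad t).
  { intros t. unfold rad. destruct (Rle_dec 0 t); [destruct (Rle_dec t 1)|]; try lra.
    pose proof (proj1 (Hdel t ltac:(lra))). lra. }
  destruct (compactness_value_1d 0 1 (fun t => mkposreal _ (Hrad t))) as [d Hd].
  exists d. intros x y s Hx Hy Hs Hxy.
  apply NNPP. intros Hn. apply (Hd x Hx). intros [t [Ht [Hxt Hdt]]].
  apply Hn. simpl in Hxt, Hdt. unfold rad in Hxt, Hdt.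
  destruct (Rle_dec 0 t); [|lra]. destruct (Rle_dec t 1); [|lra].
  destruct (Hdel t Ht) as [Hp Hb].
  assert (A1 := Hb x Hx ltac:(lra) s Hs).
  assert (A2 := Hb y Hy ltac:(replace (y - t) with ((y - x) + (x - t)) by ring;
    eapply Rle_lt_trans; [apply Rabs_triang|]; rewrite <- Rabs_Ropp, Ropp_minus_distr; lra) s Hs).
  replace (G x s - G y s) with ((G x s - G t s) - (G y s - G t s)) by ring.
  eapply Rle_trans. apply Rabs_triang. rewrite Rabs_Ropp. lra.
Qed.

(* Walk from [0] to [x] in steps of [d / 2]. *)
Lemma bounded_of_uniform_equicontinuity01 (G : R -> R -> R) (d B0 : R) : 0 < d ->
  (forall s, 0 <= s <= 1 -> Rabs (G 0 s) <= B0) ->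
  (forall x y s, 0 <= x <= 1 -> 0 <= y <= 1 -> 0 <= s <= 1 ->
    Rabs (x - y) < d -> Rabs (G x s - G y s) <= 2) ->
  exists B, forall x s, 0 <= x <= 1 -> 0 <= s <= 1 -> Rabs (G x s) <= B.
Proof.
  intros Hd HB0 Hunif.
  assert (Hchain : forall k : nat, forall x s, 0 <= x <= 1 -> x <= INR k * (d / 2) -> 0 <= s <= 1 ->
            Rabs (G x s) <= B0 + 2 * INR k).
  { induction k as [|k IH]; intros x s Hx Hk Hs.
    - simpl in *. replace x with 0 by lra. rewrite Rmult_0_r, Rplus_0_r. apply HB0; auto.
    - rewrite S_INR in *.
      destruct (Rle_dec x (INR k * (d / 2))).
      + specialize (IH x s Hx r Hs). lra.
      + set (y := Rmax 0 (x - d/2)).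
        assert (Hy : 0 <= y <= 1) by (unfold y, Rmax; destruct Rle_dec; lra).
        assert (Hyk : y <= INR k * (d/2)) by (unfold y, Rmax; destruct Rle_dec; pose proof (pos_INR k); nra).
        assert (Hxy : Rabs (x - y) < d) by (unfold y, Rmax; destruct Rle_dec; rewrite Rabs_right; lra).
        specialize (IH y s Hy Hyk Hs). specialize (Hunif x y s Hx Hy Hs Hxy).
        replace (G x s) with ((G x s - G y s) + G y s) by ring.
        eapply Rle_trans. apply Rabs_triang. lra. }
  destruct (INR_unbounded (2 / d)) as [k Hk].
  exists (B0 + 2 * INR k). intros x s Hx Hs. apply Hchain; auto.
  apply Rmult_lt_compat_r with (r := d) in Hk; auto. unfold Rdiv in Hk.
  rewrite Rmult_assoc, Rinv_l in Hk by lra. lra.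
Qed.

Definition kernel_bounded (phi : R -> R -> R) (Bp : R) : Prop :=
  forall x s s', 0 <= x <= 1 -> 0 <= s <= 1 -> 0 <= s' <= 1 ->
    Rabs (phi x s) <= Bp /\ Rabs (phi x s - phi x s') <= Bp * Rabs (s - s').

Lemma kernel_C1_bounded_derivative (F F' : R -> R -> R) :
  (forall x, 0 <= x <= 1 -> forall s, 0 <= s <= 1 -> continuous01 (F x) s /\ continuous01 (F' x) s) ->
  (forall x, 0 <= x <= 1 -> exists d, 0 < d /\ forall y, 0 <= y <= 1 -> y <> x -> Rabs (y - x) < d ->
     forall s, 0 <= s <= 1 -> Rabs ((F y s - F x s) / (y - x) - F' x s) <= 1) ->
  exists B, forall x s, 0 <= x <= 1 -> 0 <= s <= 1 -> Rabs (F x s) <= B.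
Proof.
  intros Hc HD.
  destruct (uniform_equicontinuity01 F) as [d Hd].
  { intros x Hx. apply local_equicontinuity_of_uniform_derivative with F'; auto.
    apply continuous01_bounded. intros s Hs. apply (Hc x Hx s Hs). }
  destruct (continuous01_bounded (F 0)) as [B0 HB0]; [intros s Hs; apply (Hc 0 ltac:(lra) s Hs)|].
  apply (bounded_of_uniform_equicontinuity01 F d B0); auto. apply cond_pos.
Qed.

Lemma kernel_C1_kernel_bounded phi : kernel_C1 phi -> exists Bp, 0 <= Bp /\ kernel_bounded phi Bp.
Proof.
  intros [p1 [p2 [p12 [K1 [K2 _]]]]].
  destruct (kernel_C1_bounded_derivative phi p1) as [B0 HB0].
  { intros x Hx s Hs. destruct (K1 x Hx s Hs) as [D1 [_ [D2 _]]].
    split; eapply is_deriv01_continuous01; eauto. }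
  { intros x Hx. destruct (K2 x Hx 1 Rlt_0_1) as [d [Hd Hq]].
    exists d. split; auto. intros y Hy ne Hyx s Hs. apply (Hq y Hy ne Hyx s Hs). }
  destruct (kernel_C1_bounded_derivative p2 p12) as [B2 HB2].
  { intros x Hx s Hs. destruct (K1 x Hx s Hs) as [_ [C2 [_ C12]]]. auto. }
  { intros x Hx. destruct (K2 x Hx 1 Rlt_0_1) as [d [Hd Hq]].
    exists d. split; auto. intros y Hy ne Hyx s Hs. apply (Hq y Hy ne Hyx s Hs). }
  assert (0 <= B0) by (eapply Rle_trans; [apply Rabs_pos | apply (HB0 0 0); lra]).
  assert (0 <= B2) by (eapply Rle_trans; [apply Rabs_pos | apply (HB2 0 0); lra]).
  exists (B0 + B2). split; [lra|]. intros x s s' Hx Hs Hs'. split.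
  - specialize (HB0 x s Hx Hs). lra.
  - eapply Rle_trans.
    + apply (deriv01_bound_lipschitz (phi x) (p2 x) 0 1 B2); auto; try lra.
      intros u Hu. apply (K1 x Hx u Hu).
    + apply Rmult_le_compat_r; [apply Rabs_pos | lra].
Qed.

(** * The grid and the quadrature error *)

Lemma hstep_pos n : 0 < hstep n.
Proof. apply Rinv_0_lt_compat, lt_0_INR. lia. Qed.

Lemma INR_S_hstep n : INR (S n) * hstep n = 1.
Proof. unfold hstep. field. apply not_0_INR. lia. Qed.

Lemma grid_in01 n j : (j <= S n)%nat -> 0 <= INR j * hstep n <= 1.
Proof.
  intros Hj. pose proof (hstep_pos n). split; [apply Rmult_le_pos; [apply pos_INR | lra]|].
  rewrite <- (INR_S_hstep n). apply Rmult_le_compat_r; [lra | apply le_INR; auto].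
Qed.

Lemma grid_pred n j : (1 <= j)%nat -> INR (j - 1) * hstep n = INR j * hstep n - hstep n.
Proof. intros. rewrite minus_INR by lia. simpl. ring. Qed.

Lemma grid_succ n j : INR (S j) * hstep n = INR j * hstep n + hstep n.
Proof. rewrite S_INR. ring. Qed.

Lemma lipschitz_continuous (F : R -> R) L : 0 <= L ->
  (forall y z, Rabs (F y - F z) <= L * Rabs (y - z)) -> forall x, continuous F x.
Proof.
  intros HL H x. apply continuity_pt_filterlim. intros eps Heps.
  exists (eps / (L + 1)). split; [apply Rdiv_lt_0_compat; lra|].
  intros y [_ Hy]. simpl in *. unfold R_dist in *.
  apply (Rmult_lt_compat_l (L + 1)) in Hy; [|lra].
  replace ((L + 1) * (eps / (L + 1))) with eps in Hy by (field; lra).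
  eapply Rle_lt_trans; [apply H|].
  pose proof (Rabs_pos (y - x)). nra.
Qed.

Lemma RInt_right_endpoint_error (G : R -> R) L a b : 0 <= L -> a <= b ->
  (forall y z, Rabs (G y - G z) <= L * Rabs (y - z)) ->
  Rabs (RInt G a b - (b - a) * G b) <= L * (b - a)^2.
Proof.
  intros HL Hab HG.
  assert (Hex : ex_RInt G a b) by (apply (ex_RInt_continuous (V := R_CompleteNormedModule));
    intros; apply (lipschitz_continuous G L); auto).
  assert (E : @eq R (RInt G a b - (b - a) * G b) (RInt (fun y => G y - G b) a b)).
  { rewrite (RInt_minus (V := R_CompleteNormedModule) G (fun _ => G b)) by (auto; apply ex_RInt_const).
    rewrite RInt_const. reflexivity. }
  rewrite E. replace (L * (b - a)^2) with ((b - a) * (L * (b - a))) by ring.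
  apply abs_RInt_le_const; [lra | apply (ex_RInt_minus (V := R_NormedModule)); auto; apply ex_RInt_const |].
  intros t Ht. eapply Rle_trans; [apply HG|]. apply Rmult_le_compat_l; auto. apply Rabs_le. lra.
Qed.

Lemma right_riemann_sum_error (F : R -> R) L n i : 0 <= L -> lipschitz_on F L 0 1 -> (i <= S n)%nat ->
  Rabs (RInt F 0 (INR i * hstep n) - hstep n * sum_n_m (fun j => F (INR j * hstep n)) 1 i)
    <= L * hstep n.
Proof.
  intros HL HF Hi. set (h := hstep n). pose proof (hstep_pos n) as Hh. fold h in Hh.
  pose proof (grid_in01 n i Hi) as Hxi. fold h in Hxi.
  (* extend [F] by constants outside [0, 1]: a globally Lipschitz, hence integrable, function *)
  set (G := fun y => F (clamp01 y)).
  assert (HG : forall y z, Rabs (G y - G z) <= L * Rabs (y - z)).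
  { intros y z. unfold G. eapply Rle_trans; [apply HF; apply clamp01_in|].
    apply Rmult_le_compat_l; auto. apply clamp01_contract. }
  assert (HGF : forall j, (j <= S n)%nat -> G (INR j * h) = F (INR j * h))
    by (intros j Hj; unfold G; rewrite clamp01_id; auto; apply grid_in01; auto).
  assert (Hex : forall a b, ex_RInt G a b) by (intros a b; apply (ex_RInt_continuous (V := R_CompleteNormedModule));
    intros; apply (lipschitz_continuous G L); auto).
  rewrite (RInt_ext F G) by (intros y Hy; unfold G; rewrite clamp01_id; auto;
    rewrite Rmin_left, Rmax_right in Hy; lra).
  set (a := fun j => RInt G 0 (INR j * h)).
  assert (Hcell : forall j, (1 <= j <= i)%nat -> Rabs (a j - a (j - 1)%nat - h * F (INR j * h)) <= L * h * h).
  { intros j Hj. unfold a. replace (INR (j - 1) * h) with (INR j * h - h) by (unfold h; rewrite grid_pred by lia; ring).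
    rewrite <- (RInt_Chasles G 0 (INR j * h - h) (INR j * h)), <- (HGF j) by (auto; lia).
    change (plus ?x ?y) with (x + y).
    replace (RInt G 0 (INR j * h - h) + RInt G (INR j * h - h) (INR j * h) - RInt G 0 (INR j * h - h) - h * G (INR j * h))
      with (RInt G (INR j * h - h) (INR j * h) - (INR j * h - (INR j * h - h)) * G (INR j * h)) by ring.
    replace (L * h * h) with (L * (INR j * h - (INR j * h - h))^2) by ring.
    apply RInt_right_endpoint_error; auto; lra. }
  assert (Htel : RInt G 0 (INR i * h) - h * sum_n_m (fun j => F (INR j * h)) 1 i
                 = sum_n_m (fun j => a j - a (j - 1)%nat - h * F (INR j * h)) 1 i).
  { rewrite sum_n_m_minusR, sum_n_m_telescope, sum_n_m_multR.
    unfold a. simpl. rewrite Rmult_0_l, RInt_point. change (@zero R_CompleteNormedModule) with 0. ring. }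
  rewrite Htel.
  eapply Rle_trans; [apply Rabs_sum_n_m_le|].
  eapply Rle_trans; [apply (sum_n_m_le_loc _ (fun _ => L * h * h)); exact Hcell|].
  rewrite sum_n_m_constR. replace (INR i * (L * h * h)) with ((INR i * h) * (L * h)) by ring.
  assert (0 <= L * h) by nra. nra.
Qed.

Lemma kernel_quadrature_error phi Bp w w1 w2 M n i : PC21 w w1 w2 -> PC21_bounded w w1 w2 M ->
  0 <= Bp -> kernel_bounded phi Bp -> (i <= S n)%nat ->
  Rabs (RInt (fun y => phi (INR i * hstep n) y * w y) 0 (INR i * hstep n) -
        hstep n * sum_n_m (fun j => phi (INR i * hstep n) (INR j * hstep n) * w (INR j * hstep n)) 1 i)
  <= 2 * Bp * M * hstep n.
Proof.
  intros Hw HB HBp Hphi Hi. pose proof (PC21_bounded_nonneg _ _ _ _ HB) as HM.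
  set (c := INR i * hstep n). pose proof (grid_in01 n i Hi) as Hc.
  apply (right_riemann_sum_error (fun y => phi c y * w y)); auto; [nra|].
  intros y z Hy Hz.
  destruct (Hphi c y z Hc Hy Hz) as [_ P1]. destruct (Hphi c z y Hc Hz Hy) as [P0 _].
  pose proof (bnd_w _ _ _ _ HB y Hy). pose proof (w_lipschitz w w1 w2 M Hw HB y z Hy Hz).
  replace (phi c y * w y - phi c z * w z) with ((phi c y - phi c z) * w y + phi c z * (w y - w z)) by ring.
  eapply Rle_trans. apply Rabs_triang. rewrite !Rabs_mult.
  assert (Rabs (phi c y - phi c z) * Rabs (w y) <= Bp * Rabs (y - z) * M)
    by (apply Rmult_le_compat; auto; apply Rabs_pos).
  assert (Rabs (phi c z) * Rabs (w y - w z) <= Bp * (M * Rabs (y - z)))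
    by (apply Rmult_le_compat; auto; apply Rabs_pos).
  lra.
Qed.

Ltac destruct_eqb :=
  repeat match goal with |- context [Nat.eqb ?a ?b] => destruct (Nat.eqb_spec a b) end.

Lemma Pn_apply_split theta sigma lambda phi a0 b0 a1 b1 n v i :
  Pn_apply theta sigma lambda phi a0 b0 a1 b1 n v i =
  theta (INR i * hstep n) * sum_n_m (fun j => Lentry a0 b0 a1 b1 n i j * v j) 1 n
  + sigma (INR i * hstep n) * sum_n_m (fun j => Dentry a0 b0 n i j * v j) 1 n
  + lambda (INR i * hstep n) * sum_n_m (fun j => deltaR i j * v j) 1 n
  + sum_n_m (fun j => Phientry phi n i j * v j) 1 n.
Proof.
  unfold Pn_apply, Pentry. rewrite <- !sum_n_m_multR, <- !sum_n_m_plusR.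
  apply sum_n_m_ext_locR. intros; ring.
Qed.

Lemma deltaR_apply n v i : (1 <= i <= n)%nat -> @eq R (sum_n_m (fun j => deltaR i j * v j) 1 n) (v i).
Proof.
  intros H. rewrite <- (sum_n_m_single v i n H). apply sum_n_m_ext_locR. intros k _. unfold deltaR.
  destruct_eqb; subst; try lia; ring.
Qed.

Lemma Phientry_apply phi n v i : (1 <= i <= n)%nat ->
  @eq R (sum_n_m (fun j => Phientry phi n i j * v j) 1 n)
    (hstep n * sum_n_m (fun j => phi (INR i * hstep n) (INR j * hstep n) * v j) 1 i).
Proof.
  intros H. rewrite (sum_n_m_Chasles _ 1 i n) by lia. change (plus ?a ?b) with (a + b).
  rewrite (sum_n_m_zero_loc _ (S i) n), Rplus_0_r.
  2:{ intros k Hk. unfold Phientry. destruct (Nat.leb_spec k i); [lia|ring]. }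
  rewrite <- sum_n_m_multR. apply sum_n_m_ext_locR. intros k Hk. unfold Phientry.
  destruct (Nat.leb_spec k i); [ring|lia].
Qed.

Lemma Lentry_apply a0 b0 a1 b1 n v i :
  @eq R (sum_n_m (fun j => Lentry a0 b0 a1 b1 n i j * v j) 1 n)
    (sum_n_m (fun j => Mentry a0 b0 a1 b1 n i j * v j) 1 n / hstep n ^ 2).
Proof.
  unfold Rdiv. rewrite Rmult_comm, <- sum_n_m_multR. apply sum_n_m_ext_locR. intros j _. unfold Lentry. field.
  pose proof (hstep_pos n). lra.
Qed.

Lemma Mentry_apply_interior a0 b0 a1 b1 n v i : (2 <= i)%nat -> (i < n)%nat ->
  @eq R (sum_n_m (fun j => Mentry a0 b0 a1 b1 n i j * v j) 1 n) (v (i - 1)%nat - 2 * v i + v (S i)).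
Proof.
  intros Hi Hn.
  rewrite (sum_n_m_ext_locR _ (fun j => (if j =? (i - 1)%nat then v j else 0)
      + (if j =? i then -2 * v j else 0) + (if j =? S i then v j else 0))).
  2:{ intros j Hj. unfold Mentry. destruct_eqb; try lia; ring. }
  rewrite !sum_n_m_plusR, !sum_n_m_single by lia. ring.
Qed.

Lemma Mentry_apply_first a0 b0 a1 b1 n v : (2 <= n)%nat ->
  @eq R (sum_n_m (fun j => Mentry a0 b0 a1 b1 n 1 j * v j) 1 n)
    ((4 * r0 a0 b0 n - 2) * v 1%nat + (1 - r0 a0 b0 n) * v 2%nat).
Proof.
  intros Hn.
  rewrite (sum_n_m_ext_locR _ (fun j => (if j =? 1 then (4 * r0 a0 b0 n - 2) * v j else 0)
      + (if j =? 2 then (1 - r0 a0 b0 n) * v j else 0))).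
  2:{ intros j Hj. unfold Mentry. destruct_eqb; try lia; ring. }
  rewrite !sum_n_m_plusR, !(sum_n_m_single (fun j => _ * v j)) by lia. ring.
Qed.

Lemma Mentry_apply_last a0 b0 a1 b1 n v : (2 <= n)%nat ->
  @eq R (sum_n_m (fun j => Mentry a0 b0 a1 b1 n n j * v j) 1 n)
    ((1 - r1 a1 b1 n) * v (n - 1)%nat + (4 * r1 a1 b1 n - 2) * v n).
Proof.
  intros Hn.
  rewrite (sum_n_m_ext_locR _ (fun j => (if j =? (n - 1)%nat then (1 - r1 a1 b1 n) * v j else 0)
      + (if j =? n then (4 * r1 a1 b1 n - 2) * v j else 0))).
  2:{ intros j Hj. unfold Mentry. destruct_eqb; try lia; ring. }
  rewrite !sum_n_m_plusR, !(sum_n_m_single (fun j => _ * v j)) by lia. ring.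
Qed.

Lemma Dentry_apply_first a0 b0 n v : (1 <= n)%nat ->
  @eq R (sum_n_m (fun j => Dentry a0 b0 n 1 j * v j) 1 n) (q0 a0 b0 n * v 1%nat).
Proof.
  intros Hn. pose proof (hstep_pos n).
  rewrite <- (sum_n_m_single (fun j => q0 a0 b0 n * v j) 1 n) by lia.
  apply sum_n_m_ext_locR. intros j _. unfold Dentry, Nentry. destruct_eqb; try lia; field; lra.
Qed.

Lemma Dentry_apply a0 b0 n v i : (2 <= i <= n)%nat ->
  @eq R (sum_n_m (fun j => Dentry a0 b0 n i j * v j) 1 n) ((v i - v (i - 1)%nat) / hstep n).
Proof.
  intros Hi. pose proof (hstep_pos n).
  rewrite (sum_n_m_ext_locR _ (fun j => / hstep n * ((if j =? i then v j else 0) - (if j =? (i - 1)%nat then v j else 0)))).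
  2:{ intros j _. unfold Dentry, Nentry. destruct_eqb; try lia; field; lra. }
  rewrite sum_n_m_multR, sum_n_m_minusR, !sum_n_m_single by lia. unfold Rdiv. ring.
Qed.

Definition consistency_error theta sigma lambda phi a0 b0 a1 b1 n (w w1 w2 : R -> R) (i : nat) : R :=
  Rsample n (Pop theta sigma lambda phi w w1 w2) i
  - Pn_apply theta sigma lambda phi a0 b0 a1 b1 n (Rsample n w) i
  - Bn theta a1 b1 n i * (a1 * w1 1 + b1 * w 1).

Lemma consistency_error_split theta sigma lambda phi a0 b0 a1 b1 n w w1 w2 i : (1 <= i <= n)%nat ->
  consistency_error theta sigma lambda phi a0 b0 a1 b1 n w w1 w2 i =
  theta (INR i * hstep n) * (w2 (INR i * hstep n)
    - sum_n_m (fun j => Mentry a0 b0 a1 b1 n i j * w (INR j * hstep n)) 1 n / hstep n ^ 2)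
  + sigma (INR i * hstep n) * (w1 (INR i * hstep n)
    - sum_n_m (fun j => Dentry a0 b0 n i j * w (INR j * hstep n)) 1 n)
  + (RInt (fun y => phi (INR i * hstep n) y * w y) 0 (INR i * hstep n) -
     hstep n * sum_n_m (fun j => phi (INR i * hstep n) (INR j * hstep n) * w (INR j * hstep n)) 1 i)
  - Bn theta a1 b1 n i * (a1 * w1 1 + b1 * w 1).
Proof.
  intros Hi. unfold consistency_error. rewrite Pn_apply_split, Lentry_apply.
  rewrite (deltaR_apply n (Rsample n w) i Hi), (Phientry_apply phi n (Rsample n w) i Hi).
  unfold Rsample, Pop. ring.
Qed.

(** * Rows whose stencil meets a breakpoint *)

Definition in_window (n i : nat) (p : R) : Prop :=
  INR i * hstep n - hstep n <= p <= INR i * hstep n + hstep n.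

Definition window_indicator (p : R) (n i : nat) : R :=
  if excluded_middle_informative (in_window n i p) then 1 else 0.

Fixpoint window_hits (b : nat -> R) (n K i : nat) : R :=
  match K with
  | O => 0
  | S K' => window_hits b n K' i + window_indicator (b K') n i
  end.

Lemma window_indicator_01 p n i : 0 <= window_indicator p n i <= 1.
Proof. unfold window_indicator. destruct excluded_middle_informative; lra. Qed.

Lemma window_hits_nonneg b n K i : 0 <= window_hits b n K i.
Proof. induction K; simpl; [lra|]. pose proof (window_indicator_01 (b K) n i). lra. Qed.

Lemma window_hits_ge1 b n K i : (exists k, (k < K)%nat /\ in_window n i (b k)) -> 1 <= window_hits b n K i.
Proof.
  intros [k [Hk Hw]]. induction K as [|K IH]; [lia|]. simpl. destruct (Nat.eq_dec k K) as [->|].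
  - unfold window_indicator. destruct excluded_middle_informative; [|contradiction].
    pose proof (window_hits_nonneg b n K i). lra.
  - pose proof (IH ltac:(lia)). pose proof (window_indicator_01 (b K) n i). lra.
Qed.

(* Only the rows [k0], [k0 + 1], [k0 + 2], where [k0 = floor (p / h) - 1], can see [p]. *)
Lemma window_indicator_sum_le p n : sum_n_m (window_indicator p n) 1 n <= 3.
Proof.
  pose proof (hstep_pos n) as Hh. set (h := hstep n) in *.
  destruct (archimed (p / h - 1)) as [A1 A2].
  set (z := (up (p / h - 1) - 1)%Z).
  assert (Hz : IZR z <= p / h - 1 < IZR z + 1) by (unfold z; rewrite minus_IZR; simpl; lra).
  set (k0 := Z.to_nat z).
  assert (Hk : forall i, in_window n i p -> i = k0 \/ i = S k0 \/ i = S (S k0)).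
  { intros i [W1 W2]. fold h in W1, W2.
    assert (E : INR i - 1 <= p / h <= INR i + 1).
    { split; apply (Rmult_le_reg_r h); auto; unfold Rdiv; rewrite Rmult_assoc, Rinv_l by lra; lra. }
    rewrite INR_IZR_INZ in E.
    assert (Z1 : (z <= Z.of_nat i)%Z) by (apply le_IZR; lra).
    assert (Z2 : (Z.of_nat i < z + 3)%Z) by (apply lt_IZR; rewrite plus_IZR; simpl; lra).
    unfold k0. lia. }
  eapply Rle_trans.
  { apply (sum_n_m_le_loc _ (fun i => ((if Nat.eqb i k0 then 1 else 0) + (if Nat.eqb i (S k0) then 1 else 0))
                                       + (if Nat.eqb i (S (S k0)) then 1 else 0))).
    intros i Hi. unfold window_indicator. destruct excluded_middle_informative as [W|W].
    - destruct (Hk i W) as [-> | [-> | ->]]; destruct_eqb; try lia; lra.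
    - destruct_eqb; lra. }
  rewrite !sum_n_m_plusR.
  pose proof (sum_n_m_single_le k0 n). pose proof (sum_n_m_single_le (S k0) n).
  pose proof (sum_n_m_single_le (S (S k0)) n). lra.
Qed.

Lemma window_hits_sum_le b n K : sum_n_m (window_hits b n K) 1 n <= 3 * INR K.
Proof.
  induction K as [|K IH]; cbn [window_hits].
  - rewrite sum_n_m_zero_loc by auto. simpl. lra.
  - rewrite sum_n_m_plusR, S_INR. pose proof (window_indicator_sum_le (b K) n). lra.
Qed.

Lemma Rabs_div_le X K d : 0 < d -> Rabs X <= K * d -> Rabs (X / d) <= K.
Proof.
  intros Hd H. unfold Rdiv. rewrite Rabs_mult, Rabs_inv, (Rabs_right d) by lra.
  apply (Rmult_le_reg_r d); auto. rewrite Rmult_assoc, Rinv_l by lra. lra.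
Qed.

Lemma row_combination_le T S L D Q Bc Bp M h k : 0 <= M -> 0 <= Bp -> 0 <= h <= k ->
  Rabs T <= Bc -> Rabs S <= Bc -> Rabs L <= 12 * M * k -> Rabs D <= 3 * M * h ->
  Rabs Q <= 2 * Bp * M * h -> Rabs (T * L + S * D + Q) <= (15 * Bc + 2 * Bp) * M * k.
Proof.
  intros HM HBp Hk HT HS HL HD HQ.
  eapply Rle_trans. apply Rabs_triang. eapply Rle_trans. apply Rplus_le_compat_r. apply Rabs_triang.
  rewrite !Rabs_mult.
  assert (Rabs T * Rabs L <= Bc * (12 * M * k)) by (apply Rmult_le_compat; auto; apply Rabs_pos).
  assert (Rabs S * Rabs D <= Bc * (3 * M * h)) by (apply Rmult_le_compat; auto; apply Rabs_pos).
  assert (0 <= Bc) by (pose proof (Rabs_pos T); lra).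
  assert (Bc * (3 * M * h) <= Bc * (3 * M * k)) by (apply Rmult_le_compat_l; nra).
  assert (2 * Bp * M * h <= 2 * Bp * M * k) by (apply Rmult_le_compat_l; nra).
  nra.
Qed.

(* Substituting the boundary condition at [0], the first row of [L_n] is the central second
   difference corrected by [r_0] times the one-sided defect at [0], and the first row of [D_n]
   is the backward difference corrected by a multiple of the first-order Taylor remainder. *)
Lemma first_row_L_identity a0 b0 h w0 w1v w2v wd0 w2c : 3 * a0 - 2 * h * b0 <> 0 -> h <> 0 ->
  a0 * wd0 + b0 * w0 = 0 ->
  w2c - ((4 * (a0 / (3 * a0 - 2 * h * b0)) - 2) * w1v + (1 - a0 / (3 * a0 - 2 * h * b0)) * w2v) / h^2 =
  w2c - (w0 - 2 * w1v + w2v) / h^2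
  - a0 / (3 * a0 - 2 * h * b0) * (4 * (w1v - w0 - h * wd0) - (w2v - w0 - 2 * h * wd0)) / h^2.
Proof.
  intros HD Hh BC.
  apply Rminus_diag_uniq. rewrite <- (Rmult_0_r (- 2 / (h * (3 * a0 - 2 * h * b0)))), <- BC.
  field. auto.
Qed.

Lemma first_row_D_identity a0 b0 h w0 w1v wd0 w1c : a0 - h * b0 <> 0 -> h <> 0 ->
  a0 * wd0 + b0 * w0 = 0 ->
  w1c - - b0 / (a0 - h * b0) * w1v =
  (w1c - (w1v - w0) / h) + a0 / (a0 - h * b0) * (w1v - w0 - h * wd0) / h.
Proof.
  intros HD Hh BC.
  apply Rminus_diag_uniq. rewrite <- (Rmult_0_r (/ (a0 - h * b0))), <- BC.
  field. auto.
Qed.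

(* At [1] the boundary term [B_n f] plays the role of the boundary condition. *)
Lemma last_row_identity a1 b1 h th wm wc w1p wd1 w2c : 3 * a1 + 2 * h * b1 <> 0 -> h <> 0 ->
  th * (w2c - ((1 - a1 / (3 * a1 + 2 * h * b1)) * wm + (4 * (a1 / (3 * a1 + 2 * h * b1)) - 2) * wc) / h^2)
  - (2 * h * th / (3 * a1 + 2 * h * b1)) / h^2 * (a1 * wd1 + b1 * w1p) =
  th * (w2c - (wm - 2 * wc + w1p) / h^2
        - a1 / (3 * a1 + 2 * h * b1) * (4 * (wc - w1p - - h * wd1) - (wm - w1p - 2 * - h * wd1)) / h^2).
Proof. intros HD Hh. field. auto. Qed.

Section Rows.

Variables (theta sigma lambda : R -> R) (phi : R -> R -> R) (a0 b0 a1 b1 : R) (n : nat).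
Variables (w w1 w2 : R -> R) (M Bc Bp : R).
Hypothesis Hn : (2 <= n)%nat.
Hypothesis Hcoef : forall u, 0 <= u <= 1 -> Rabs (theta u) <= Bc /\ Rabs (sigma u) <= Bc.
Hypothesis Hphi : kernel_bounded phi Bp.
Hypothesis Hw : PC21 w w1 w2.
Hypothesis Hbd : PC21_bounded w w1 w2 M.
Hypothesis Hbc0 : a0 * w1 0 + b0 * w 0 = 0.
Hypothesis Hwd0 : 3 * a0 - 2 * hstep n * b0 <> 0 /\ a0 - hstep n * b0 <> 0.
Hypothesis Hwd1 : 3 * a1 + 2 * hstep n * b1 <> 0.
Hypothesis Hr0 : Rabs (r0 a0 b0 n) <= 1/2.
Hypothesis Hp0 : Rabs (a0 / (a0 - hstep n * b0)) <= 2.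
Hypothesis Hr1 : Rabs (r1 a1 b1 n) <= 1/2.

Local Notation h := (hstep n).
Local Notation err := (consistency_error theta sigma lambda phi a0 b0 a1 b1 n w w1 w2).
Local Notation A := (15 * Bc + 2 * Bp).

Let HM : 0 <= M := PC21_bounded_nonneg w w1 w2 M Hbd.

Let HBp : 0 <= Bp.
Proof. destruct (Hphi 0 0 0) as [H _]; try lra. pose proof (Rabs_pos (phi 0 0)). lra. Qed.

Let HBc : 0 <= Bc.
Proof. destruct (Hcoef 0) as [H _]; try lra. pose proof (Rabs_pos (theta 0)). lra. Qed.

Let HAM : 0 <= A * M.
Proof. apply Rmult_le_pos; lra. Qed.

Let Hh : 0 < h := hstep_pos n.

Let Hh3 : h <= 1/3.
Proof.
  pose proof (INR_S_hstep n). assert (3 <= INR (S n)) by (replace 3 with (INR 3) by (simpl; ring); apply le_INR; lia).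
  nra.
Qed.

Let Hquad i : (i <= S n)%nat ->
  Rabs (RInt (fun y => phi (INR i * h) y * w y) 0 (INR i * h) -
        h * sum_n_m (fun j => phi (INR i * h) (INR j * h) * w (INR j * h)) 1 i) <= 2 * Bp * M * h.
Proof. intros Hi. apply kernel_quadrature_error with w1 w2; auto. Qed.

Lemma central_quotient_error c : 0 <= c - h -> c + h <= 1 ->
  Rabs (w2 c - (w (c - h) - 2 * w c + w (c + h)) / h^2) <= 3 * M /\
  (lipschitz_on w2 M (c - h) (c + h) -> Rabs (w2 c - (w (c - h) - 2 * w c + w (c + h)) / h^2) <= 4 * M * h).
Proof.
  intros H1 H2. split.
  - pose proof (Rabs_div_le _ (2 * M) (h^2) (pow_lt h 2 Hh) (second_difference_crude w w1 w2 M Hw Hbd c h Hh H1 H2)).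
    pose proof (bnd_w2 _ _ _ _ Hbd c ltac:(lra)).
    unfold Rminus at 1. eapply Rle_trans; [apply Rabs_triang|]. rewrite Rabs_Ropp. lra.
  - intros HL. pose proof (second_difference_sharp w w1 w2 M Hw Hbd c h Hh H1 H2 HL).
    replace (w2 c - (w (c - h) - 2 * w c + w (c + h)) / h^2) with
      (- ((w (c - h) - 2 * w c + w (c + h) - h^2 * w2 c) / h^2)) by (field; lra).
    rewrite Rabs_Ropp. apply Rabs_div_le; [apply pow_lt; auto|]. replace (4 * M * h * h^2) with (4 * M * h^3) by ring. auto.
Qed.

Lemma corrected_quotient_error c r c0 d : 0 <= c - h -> c + h <= 1 -> Rabs r <= 1/2 -> d^2 = h^2 ->
  c - h <= c0 <= c + h -> c - h <= c0 + d <= c + h -> c - h <= c0 + 2 * d <= c + h ->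
  let E := w2 c - (w (c - h) - 2 * w c + w (c + h)) / h^2 - r * one_sided_defect w w1 c0 d / h^2 in
  Rabs E <= 7 * M /\ (lipschitz_on w2 M (c - h) (c + h) -> Rabs E <= 12 * M * h).
Proof.
  intros H1 H2 Hr Hd W0 W1 W2 E.
  destruct (central_quotient_error c H1 H2) as [L1 L2].
  assert (Hcorr : forall K, Rabs (one_sided_defect w w1 c0 d) <= K * h^2 -> 0 <= K ->
            Rabs (r * one_sided_defect w w1 c0 d / h^2) <= K / 2).
  { intros K HK HK0. apply Rabs_div_le; [apply pow_lt; auto|]. rewrite Rabs_mult.
    pose proof (Rabs_pos (one_sided_defect w w1 c0 d)). pose proof (pow2_ge_0 h).
    assert (Rabs r * Rabs (one_sided_defect w w1 c0 d) <= 1/2 * (K * h^2))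
      by (apply Rmult_le_compat; auto; apply Rabs_pos).
    lra. }
  unfold E. unfold Rminus at 1. split.
  - pose proof (one_sided_defect_crude w w1 w2 M Hw Hbd c0 d ltac:(lra) ltac:(lra) ltac:(lra)) as Q.
    rewrite Hd in Q. pose proof (Hcorr (8 * M) Q ltac:(lra)).
    eapply Rle_trans; [apply Rabs_triang|]. rewrite Rabs_Ropp. lra.
  - intros HL. pose proof (one_sided_defect_sharp w w1 w2 M Hw Hbd (c - h) (c + h) c0 d H1 H2 HL W0 W1 W2) as Q.
    rewrite Hd in Q. replace (8 * M * (c + h - (c - h)) * h^2) with ((16 * M * h) * h^2) in Q by ring.
    pose proof (Hcorr (16 * M * h) Q ltac:(nra)). pose proof (L2 HL).
    eapply Rle_trans; [apply Rabs_triang|]. rewrite Rabs_Ropp. lra.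
Qed.

Lemma row_interior_error i : (2 <= i)%nat -> (i < n)%nat ->
  Rabs (err i) <= A * M /\
  (lipschitz_on w2 M (INR i * h - h) (INR i * h + h) -> Rabs (err i) <= A * M * h).
Proof.
  intros Hi1 Hi2.
  pose proof (grid_in01 n i ltac:(lia)) as Hc.
  pose proof (grid_in01 n (i - 1) ltac:(lia)) as Hcm. rewrite grid_pred in Hcm by lia.
  pose proof (grid_in01 n (S i) ltac:(lia)) as Hcp. rewrite grid_succ in Hcp.
  pose proof (Hquad i ltac:(lia)) as Q.
  rewrite consistency_error_split by lia.
  rewrite Mentry_apply_interior, Dentry_apply, grid_pred, grid_succ by lia.
  unfold Bn. destruct (Nat.eqb_spec i n); [lia|].
  set (c := INR i * h) in *.
  destruct (Hcoef c Hc) as [T1 T2].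
  destruct (central_quotient_error c ltac:(lra) ltac:(lra)) as [L1 L2].
  pose proof (backward_difference_error w w1 w2 M Hw Hbd c h Hh ltac:(lra) ltac:(lra)) as FD.
  rewrite Rmult_0_l, Rminus_0_r.
  assert (0 <= M * h) by nra.
  split; [rewrite <- (Rmult_1_r (A * M)) | intros HL; pose proof (L2 HL)];
    apply (row_combination_le _ _ _ _ _ Bc Bp M h); auto; lra.
Qed.

Lemma row_first_error :
  Rabs (err 1) <= A * M /\
  (lipschitz_on w2 M (INR 1 * h - h) (INR 1 * h + h) -> Rabs (err 1) <= A * M * h).
Proof.
  destruct Hwd0 as [HD0 HE0].
  pose proof (Hquad 1 ltac:(lia)) as Q.
  rewrite consistency_error_split by lia.
  rewrite Mentry_apply_first, Dentry_apply_first by lia.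
  unfold Bn. destruct (Nat.eqb_spec 1 n); [lia|]. rewrite Rmult_0_l, Rminus_0_r.
  replace (INR 2 * h) with (h + h) by (simpl; ring).
  replace (INR 1 * h) with h in * by (simpl; ring).
  destruct (Hcoef h ltac:(lra)) as [T1 T2].
  pose proof Hr0 as Hr. unfold r0, q0 in *.
  rewrite (first_row_L_identity a0 b0 h (w 0) (w h) (w (h + h)) (w1 0)),
    (first_row_D_identity a0 b0 h (w 0) (w h) (w1 0)) by (auto; lra).
  destruct (corrected_quotient_error h (a0 / (3 * a0 - 2 * h * b0)) 0 h ltac:(lra) ltac:(lra) Hr
    eq_refl ltac:(lra) ltac:(lra) ltac:(lra)) as [L1 L2].
  unfold one_sided_defect in L1, L2.
  replace (h - h) with 0 in L1, L2 by ring. replace (0 + h) with h in L1, L2 by ring.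
  replace (0 + 2 * h) with (h + h) in L1, L2 by ring.
  assert (D : Rabs (w1 h - (w h - w 0) / h + a0 / (a0 - h * b0) * (w h - w 0 - h * w1 0) / h) <= 3 * M * h).
  { pose proof (backward_difference_error w w1 w2 M Hw Hbd h h Hh ltac:(lra) ltac:(lra)) as FD.
    replace (h - h) with 0 in FD by ring.
    pose proof (taylor_order1 w w1 w2 M Hw Hbd 0 h ltac:(lra) ltac:(lra)) as T0.
    replace (h - 0) with h in T0 by ring.
    assert (Rabs (a0 / (a0 - h * b0) * (w h - w 0 - h * w1 0) / h) <= 2 * M * h).
    { replace (a0 / (a0 - h * b0) * (w h - w 0 - h * w1 0) / h)
        with (a0 / (a0 - h * b0) * ((w h - w 0 - h * w1 0) / h)) by (unfold Rdiv; ring).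
      rewrite Rabs_mult, Rmult_assoc. apply Rmult_le_compat; try apply Rabs_pos; auto.
      apply Rabs_div_le; auto. replace (M * h * h) with (M * h^2) by ring. auto. }
    eapply Rle_trans; [apply Rabs_triang | lra]. }
  assert (0 <= M * h) by nra.
  split; [rewrite <- (Rmult_1_r (A * M)) | intros HL; rewrite Rminus_diag in HL; pose proof (L2 HL)];
    apply (row_combination_le _ _ _ _ _ Bc Bp M h); auto; lra.
Qed.

Lemma row_last_error :
  Rabs (err n) <= A * M /\
  (lipschitz_on w2 M (INR n * h - h) (INR n * h + h) -> Rabs (err n) <= A * M * h).
Proof.
  pose proof (Hquad n ltac:(lia)) as Q.
  rewrite consistency_error_split by lia.
  rewrite Mentry_apply_last, Dentry_apply, grid_pred by lia.
  unfold Bn, bn. rewrite Nat.eqb_refl.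
  assert (Xn : INR n * h = 1 - h) by (pose proof (INR_S_hstep n); rewrite S_INR in H; lra).
  rewrite Xn in *.
  destruct (Hcoef (1 - h) ltac:(lra)) as [T1 T2].
  set (Q' := RInt _ 0 (1 - h) - _) in Q |- *.
  replace (theta (1 - h) * (w2 (1 - h) - ((1 - r1 a1 b1 n) * w (1 - h - h) + (4 * r1 a1 b1 n - 2) * w (1 - h)) / h ^ 2)
           + sigma (1 - h) * (w1 (1 - h) - (w (1 - h) - w (1 - h - h)) / h) + Q'
           - 2 * h * theta (1 - h) / (3 * a1 + 2 * h * b1) / h ^ 2 * (a1 * w1 1 + b1 * w 1))
    with ((theta (1 - h) * (w2 (1 - h) - ((1 - r1 a1 b1 n) * w (1 - h - h) + (4 * r1 a1 b1 n - 2) * w (1 - h)) / h ^ 2)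
           - 2 * h * theta (1 - h) / (3 * a1 + 2 * h * b1) / h ^ 2 * (a1 * w1 1 + b1 * w 1))
           + sigma (1 - h) * (w1 (1 - h) - (w (1 - h) - w (1 - h - h)) / h) + Q') by ring.
  unfold r1. rewrite last_row_identity by (auto; lra). fold (r1 a1 b1 n).
  destruct (corrected_quotient_error (1 - h) (r1 a1 b1 n) 1 (- h) ltac:(lra) ltac:(lra) Hr1
    ltac:(ring) ltac:(lra) ltac:(lra) ltac:(lra)) as [L1 L2].
  unfold one_sided_defect in L1, L2.
  replace (1 - h + h) with 1 in L1, L2 by ring. replace (1 + - h) with (1 - h) in L1, L2 by ring.
  replace (1 + 2 * - h) with (1 - h - h) in L1, L2 by ring.
  pose proof (backward_difference_error w w1 w2 M Hw Hbd (1 - h) h Hh ltac:(lra) ltac:(lra)) as FD.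
  assert (0 <= M * h) by nra.
  split; [rewrite <- (Rmult_1_r (A * M)) | intros HL; replace (1 - h + h) with 1 in HL by ring; pose proof (L2 HL)];
    apply (row_combination_le _ _ _ _ _ Bc Bp M h); auto; lra.
Qed.

Lemma row_error i : (1 <= i <= n)%nat ->
  Rabs (err i) <= A * M /\
  (lipschitz_on w2 M (INR i * h - h) (INR i * h + h) -> Rabs (err i) <= A * M * h).
Proof.
  intros Hi.
  destruct (Nat.eq_dec i 1) as [->|]; [apply row_first_error|].
  destruct (Nat.eq_dec i n) as [->|]; [apply row_last_error|].
  apply row_interior_error; lia.
Qed.

(* Rows whose stencil [[x_{i-1}, x_{i+1}]] avoids the non-differentiability points of [w2]
   are O(h); the others, counted by [window_hits], are O(1). *)
Lemma row_error_sqr_le (b : nat -> R) K i : (1 <= i <= n)%nat ->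
  (forall u, 0 <= u <= 1 -> ~ diff01 w2 u -> exists k, (k < K)%nat /\ u = b k) ->
  (err i)^2 <= (A * M)^2 * (h^2 + window_hits b n K i).
Proof.
  intros Hi Hbk. destruct (row_error i Hi) as [E1 E2].
  pose proof (window_hits_nonneg b n K i). pose proof (pow2_ge_0 h).
  rewrite <- (pow2_abs (err i)). pose proof (Rabs_pos (err i)).
  destruct (classic (exists k, (k < K)%nat /\ in_window n i (b k))) as [Hbad|Hgood].
  - pose proof (window_hits_ge1 b n K i Hbad).
    assert (Rabs (err i) ^ 2 <= (A * M) ^ 2) by (apply pow_incr; lra).
    pose proof (pow2_ge_0 (A * M)). nra.
  - assert (HL : lipschitz_on w2 M (INR i * h - h) (INR i * h + h)).
    { pose proof (grid_in01 n (i - 1) ltac:(lia)) as Hcm. rewrite grid_pred in Hcm by lia.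
      pose proof (grid_in01 n (S i) ltac:(lia)) as Hcp. rewrite grid_succ in Hcp.
      apply (w2_lipschitz_of_diff01 w w1 w2 M Hbd); try lra.
      intros y Hy. apply NNPP. intros Hnd. destruct (Hbk y ltac:(lra) Hnd) as [k [Hk ->]].
      apply Hgood. exists k. split; auto. }
    assert (Rabs (err i) ^ 2 <= (A * M * h) ^ 2) by (apply pow_incr; pose proof (E2 HL); lra).
    pose proof (pow2_ge_0 (A * M)). nra.
Qed.

Lemma norm2d_consistency_error_le (b : nat -> R) K :
  (forall u, 0 <= u <= 1 -> ~ diff01 w2 u -> exists k, (k < K)%nat /\ u = b k) ->
  norm2d n err <= A * sqrt (1 + 3 * INR K) * sqrt h * M.
Proof.
  intros Hbk.
  assert (HnS : INR n * h <= 1) by (pose proof (INR_S_hstep n); rewrite S_INR in H; lra).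
  assert (Hsum : sum_n_m (fun i => (err i)^2) 1 n <= (A * M)^2 * (1 + 3 * INR K)).
  { eapply Rle_trans; [apply sum_n_m_le_loc; intros i Hi; exact (row_error_sqr_le b K i Hi Hbk)|].
    rewrite sum_n_m_multR, sum_n_m_plusR, sum_n_m_constR.
    pose proof (window_hits_sum_le b n K). pose proof (pos_INR n).
    assert (INR n * h ^ 2 <= 1) by nra.
    apply Rmult_le_compat_l; [apply pow2_ge_0 | lra]. }
  unfold norm2d.
  replace (A * sqrt (1 + 3 * INR K) * sqrt h * M) with (sqrt h * (A * M * sqrt (1 + 3 * INR K))) by ring.
  apply Rmult_le_compat_l; [apply sqrt_pos|].
  rewrite <- (sqrt_pow2 (A * M)), <- sqrt_mult_alt by (auto; apply pow2_ge_0).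
  apply sqrt_le_1_alt. exact Hsum.
Qed.

End Rows.

Lemma inI_finite theta sigma lambda : PCk 1 theta -> PCk 1 sigma -> PCk 1 lambda ->
  finitely_enumerable (inI theta sigma lambda).
Proof.
  intros Ht Hs Hl.
  apply (finitely_enumerable_mono (fun u => (0 <= u <= 1 /\ ~ diff01 theta u) \/
    (0 <= u <= 1 /\ ~ diff01 sigma u) \/ (0 <= u <= 1 /\ ~ diff01 lambda u))).
  - intros u [Hu [H|[H|H]]]; tauto.
  - repeat apply finitely_enumerable_or; apply PCk1_nondiff_finite; auto.
Qed.

(* With Rocq's total division the bounds also hold, trivially, when [a = 0]. *)
Lemma boundary_ratio_bounds a b h : 0 <= h -> (a = 0 \/ 2 * h * Rabs b <= Rabs a) ->
  Rabs (a / (3 * a - 2 * h * b)) <= 1/2 /\ Rabs (a / (a - h * b)) <= 2 /\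
  Rabs (a / (3 * a + 2 * h * b)) <= 1/2.
Proof.
  intros Hh Hab. destruct (Req_dec a 0) as [->|Ha].
  { unfold Rdiv. rewrite !Rmult_0_l, Rabs_R0. lra. }
  destruct Hab as [|H]; [contradiction|].
  assert (Hhb : Rabs (h * b) = h * Rabs b) by (rewrite Rabs_mult, (Rabs_right h) by lra; auto).
  pose proof (Rabs_triang_inv (3 * a) (2 * (h * b))) as T1.
  pose proof (Rabs_triang_inv a (h * b)) as T2.
  pose proof (Rabs_triang_inv (3 * a) (- (2 * (h * b)))) as T3.
  rewrite Rabs_Ropp in T3. rewrite !Rabs_mult, !(Rabs_right 3), !(Rabs_right 2) in T1, T3 by lra.
  rewrite !Rabs_mult in T2. rewrite (Rabs_right h) in T1, T2, T3 by lra.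
  pose proof (Rabs_pos a). pose proof (Rabs_pos b).
  pose proof (Rabs_pos_lt a Ha).
  assert (Hq : forall d K, 0 < K -> Rabs a <= K * Rabs d -> Rabs (a / d) <= K).
  { intros d K HK Hd. assert (0 < Rabs d) by nra. unfold Rdiv. rewrite Rabs_mult, Rabs_inv.
    apply (Rmult_le_reg_r (Rabs d)); [lra|]. rewrite Rmult_assoc, Rinv_l by lra. lra. }
  split; [|split]; apply Hq; try lra.
  - replace (3 * a - 2 * h * b) with (3 * a - 2 * (h * b)) by ring. lra.
  - replace (3 * a + 2 * h * b) with (3 * a - - (2 * (h * b))) by ring. lra.
Qed.

Lemma small_step_condition a b : exists e, 0 < e /\
  forall h, 0 <= h <= e -> a = 0 \/ 2 * h * Rabs b <= Rabs a.
Proof.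
  destruct (Req_dec a 0) as [->|Ha]; [exists 1; split; auto; lra|].
  pose proof (Rabs_pos b). pose proof (Rabs_pos_lt a Ha).
  exists (Rabs a / (2 * Rabs b + 1)). split; [apply Rdiv_lt_0_compat; lra|].
  intros h [Hh0 Hh]. right.
  apply (Rmult_le_compat_r (2 * Rabs b + 1)) in Hh; [|lra].
  replace (Rabs a / (2 * Rabs b + 1) * (2 * Rabs b + 1)) with (Rabs a) in Hh by (field; lra).
  nra.
Qed.

Lemma hstep_eventually_le e : 0 < e -> exists N, forall n, (N <= n)%nat -> hstep n <= e.
Proof.
  intros He. destruct (INR_unbounded (/ e)) as [N HN]. exists N. intros n Hn.
  assert (HSn : / e < INR (S n)) by (eapply Rlt_le_trans; [exact HN | apply le_INR; lia]).
  unfold hstep. rewrite <- (Rinv_inv e). apply Rlt_le, Rinv_lt_contravar; auto.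
  apply Rmult_lt_0_compat; [apply Rinv_0_lt_compat; lra | apply lt_0_INR; lia].
Qed.

Lemma eventually_boundary_ratios a0 b0 a1 b1 : exists N, forall n, (N <= n)%nat ->
  (2 <= n)%nat /\ Rabs (r0 a0 b0 n) <= 1/2 /\ Rabs (a0 / (a0 - hstep n * b0)) <= 2 /\
  Rabs (r1 a1 b1 n) <= 1/2.
Proof.
  destruct (small_step_condition a0 b0) as [e0 [He0 H0]].
  destruct (small_step_condition a1 b1) as [e1 [He1 H1]].
  pose proof (Rmin_l (Rmin e0 e1) (1/4)). pose proof (Rmin_r (Rmin e0 e1) (1/4)).
  pose proof (Rmin_l e0 e1). pose proof (Rmin_r e0 e1).
  destruct (hstep_eventually_le (Rmin (Rmin e0 e1) (1/4))) as [N HN]; [repeat apply Rmin_pos; lra|].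
  exists N. intros n Hn. specialize (HN n Hn). pose proof (hstep_pos n).
  split.
  - assert (H2n : INR 2 < INR (S n)); [|apply INR_lt in H2n; lia].
    pose proof (INR_S_hstep n). replace (INR 2) with 2 by (simpl; lra). nra.
  - destruct (boundary_ratio_bounds a0 b0 (hstep n)) as [R0 [P0 _]]; [lra | apply H0; lra |].
    destruct (boundary_ratio_bounds a1 b1 (hstep n)) as [_ [_ R1]]; [lra | apply H1; lra |].
    auto.
Qed.

Lemma Lub_Rbar_le_Rbar_mult_lub (P : R -> Prop) (f : R -> R) (g : R -> Rbar) (c t0 : R) :
  0 < c -> P t0 -> (forall t, P t -> Rbar_le 0 (g t)) ->
  (forall t (M : R), P t -> Rbar_le (g t) M -> f t <= c * M) ->
  Rbar_le (Lub_Rbar (fun v => exists t, P t /\ v = f t))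
          (Rbar_mult c (Rbar_lub (fun v => exists t, P t /\ v = g t))).
Proof.
  intros Hc Ht0 Hg Hfg.
  set (E := fun v => exists t, P t /\ v = g t).
  assert (HE : forall t, P t -> Rbar_le (g t) (Rbar_lub E)) by (intros t Ht; apply Rbar_lub_ub; exists t; auto).
  destruct (Rbar_lub E) as [M| |] eqn:ES.
  - apply (proj2 (Lub_Rbar_correct _)). intros v [t [Ht ->]]. apply Hfg; auto.
  - replace (Rbar_mult c p_infty) with p_infty.
    + destruct (Lub_Rbar _); simpl; auto.
    + simpl. unfold Rbar_mult'. destruct Rle_dec; [destruct Rle_lt_or_eq_dec|]; auto; lra.
  - exfalso. exact (Rbar_le_trans _ _ _ (Hg t0 Ht0) (HE t0 Ht0)).
Qed.

Theorem lemma2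
  (theta sigma lambda : R -> R) (phi : R -> R -> R) (a0 b0 a1 b1 : R)
  (Htheta : PCk 1 theta) (Hsigma : PCk 1 sigma) (Hlambda : PCk 1 lambda)
  (Htheta_pos : exists c, 0 < c /\ forall x, 0 <= x <= 1 -> c <= theta x)
  (Hphi : kernel_C1 phi)
  (Hwd : forall n, (1 <= n)%nat ->
     3 * a1 + 2 * hstep n * b1 <> 0 /\ 3 * a0 - 2 * hstep n * b0 <> 0 /\
     a0 - hstep n * b0 <> 0)
  (T rho : R) (HT : 0 < T) (Hrho : 0 <= rho < T) :
  exists C, 0 < C /\
  forall xi xix xixx : R -> R -> R,
    (forall t, rho <= t <= T ->
       PC21 (fun x => xi x t) (fun x => xix x t) (fun x => xixx x t)) ->
    cont_PC21 rho T xi xix xixx ->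
    (forall t, rho <= t <= T -> a0 * xix 0 t + b0 * xi 0 t = 0) ->
    (forall t, rho <= t <= T -> forall x, 0 <= x <= 1 ->
       ~ diff01 (fun y => xixx y t) x -> inI theta sigma lambda x) ->
    exists N, forall n, (N <= n)%nat ->
      Rbar_le
        (Lub_Rbar (fun v => exists t, rho <= t <= T /\
           v = norm2d n (fun i =>
                 Rsample n (Pop theta sigma lambda phi
                         (fun x => xi x t) (fun x => xix x t)
                         (fun x => xixx x t)) i
               - Pn_apply theta sigma lambda phi a0 b0 a1 b1 n
                   (Rsample n (fun x => xi x t)) i
               - Bn theta a1 b1 n i * (a1 * xix 1 t + b1 * xi 1 t))))
        (Rbar_mult (C * sqrt (hstep n))
           (Rbar_lub (fun v => exists t, rho <= t <= T /\
              v = PC21_norm (fun x => xi x t) (fun x => xix x t)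
                            (fun x => xixx x t)))).
Proof.
  destruct (PCk1_bounded theta Htheta) as [Bt [HBt0 HBt]].
  destruct (PCk1_bounded sigma Hsigma) as [Bs [HBs0 HBs]].
  assert (Hcoef : forall u, 0 <= u <= 1 -> Rabs (theta u) <= Bt + Bs /\ Rabs (sigma u) <= Bt + Bs)
    by (intros u Hu; pose proof (HBt u Hu); pose proof (HBs u Hu); lra).
  destruct (kernel_C1_kernel_bounded phi Hphi) as [Bp [HBp Hker]].
  destruct (inI_finite theta sigma lambda Htheta Hsigma Hlambda) as [b [K HbK]].
  set (C0 := (15 * (Bt + Bs) + 2 * Bp) * sqrt (1 + 3 * INR K)).
  assert (HC0 : 0 <= C0) by (apply Rmult_le_pos; [lra | apply sqrt_pos]).
  exists (C0 + 1). split; [lra|].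
  intros xi xix xixx Hxi _ Hbc Hnd.
  destruct (eventually_boundary_ratios a0 b0 a1 b1) as [N HN].
  exists N. intros n Hn. destruct (HN n Hn) as [Hn2 [Hr0 [Hp0 Hr1]]].
  destruct (Hwd n ltac:(lia)) as [Hwd1 Hwd0].
  pose proof (sqrt_lt_R0 _ (hstep_pos n)) as Hsh.
  apply (Lub_Rbar_le_Rbar_mult_lub (fun t => rho <= t <= T)
    (fun t => norm2d n (consistency_error theta sigma lambda phi a0 b0 a1 b1 n
                 (fun x => xi x t) (fun x => xix x t) (fun x => xixx x t)))
    _ _ rho); [nra | lra | intros t Ht; apply PC21_norm_nonneg, Hxi, Ht |].
  intros t M Ht HM.
  pose proof (PC21_norm_le_bounded _ _ _ M (Hxi t Ht) HM) as Hbd.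
  pose proof (PC21_bounded_nonneg _ _ _ _ Hbd).
  eapply Rle_trans.
  - apply (norm2d_consistency_error_le theta sigma lambda phi a0 b0 a1 b1 n _ _ _ M (Bt + Bs) Bp)
      with (b := b); auto.
    intros u Hu Hnu. apply HbK, (Hnd t Ht u Hu Hnu).
  - fold C0. nra.
Qed.
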